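(* Let $\mathcal A$ be a category with finite colimits and let $(\mathcal B,\Theta)$ be a category with nullhomotopies satisfying the reduced interchange, such that $\mathcal B$ has finite colimits, all of them $\Theta$-strong, and every arrow of $\mathcal B$ has a strong $\Theta$-cokernel. Let $\mathrm{Colim}[\mathcal A,\mathcal B]$ be the category whose objects are finite-colimit-preserving functors $\mathcal A\to\mathcal B$ and whose arrows are natural transformations, and let $\mathrm{HC}[\mathrm{Arr}(\mathcal A),\mathcal B]$ be the category whose objects are morphisms of categories with nullhomotopies $(\mathrm{Arr}(\mathcal A),\Theta_\Delta)\to(\mathcal B,\Theta)$ preserving finite colimits and homotopy cokernels (i.e. sending $\Theta_\Delta$-cokernels to $\Theta$-cokernels), and whose arrows are 2-morphisms. Then precomposition with $\Gamma$, $\mathcal M\mapsto\Gamma\cdot\mathcal M$, is an equivalence of categories $\mathrm{HC}[\mathrm{Arr}(\mathcal A),\mathcal B]\to\mathrm{Colim}[\mathcal A,\mathcal B]$, with quasi-inverse given by the extension $\mathcal F\mapsto\widehat{\mathcal F}$ (the morphism $\widehat{\mathcal F}$ sending $(A,a,A_0)$ to the codomain of a $\Theta$-cokernel of $\mathcal F(a)$).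
   Context: Composition is written diagrammatically: $f\cdot g$ means first $f$ then $g$. A structure of nullhomotopies $\Theta$ on a category $\mathcal B$ consists of: for each arrow $g$ a set $\Theta(g)$, and for each composable $A\xrightarrow{f}B\xrightarrow{g}C\xrightarrow{h}D$ a map $f\circ-\circ h\colon\Theta(g)\to\Theta(f\cdot g\cdot h)$, with $(f'\cdot f)\circ\varphi\circ(h\cdot h')=f'\circ(f\circ\varphi\circ h)\circ h'$ and $\mathrm{id}\circ\varphi\circ\mathrm{id}=\varphi$; write $f\circ\varphi$, $\varphi\circ h$ when the other arrow is an identity. Reduced interchange: for $f\colon A\to B$, $g\colon B\to C$, $\alpha\in\Theta(f)$, $\beta\in\Theta(g)$: $\alpha\circ g=f\circ\beta$. $\mathrm{Arr}(\mathcal A)$: objects $(B,b,B_0)$ with $b\colon B\to B_0$ in $\mathcal A$; arrows $(g,g_0)\colon(B,b,B_0)\to(C,c,C_0)$ with $b\cdot g_0=g\cdot c$. $\Theta_\Delta(g,g_0)=\{\varphi\colon B_0\to C\mid b\cdot\varphi=g,\ \varphi\cdot c=g_0\}$, with $(f,f_0)\circ\varphi\circ(h,h_0)=f_0\cdot\varphi\cdot h$. $\Gamma\colon\mathcal A\to\mathrm{Arr}(\mathcal A)$, $X\mapsto(\emptyset,\emptyset_X,X)$, $g_0\mapsto(\mathrm{id}_\emptyset,g_0)$, where $\emptyset$ is the initial object. A morphism $(\mathcal A,\Theta_{\mathcal A})\to(\mathcal B,\Theta_{\mathcal B})$ is a functor $\mathcal F$ with maps $\mathcal F_g\colon\Theta_{\mathcal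 A}(g)\to\Theta_{\mathcal B}(\mathcal Fg)$ satisfying $\mathcal F_{f\cdot g\cdot h}(f\circ\varphi\circ h)=\mathcal Ff\circ\mathcal F_g(\varphi)\circ\mathcal Fh$. A 2-morphism $\alpha\colon\mathcal F\Rightarrow\mathcal G$ is a natural transformation with $\alpha_B\circ\mathcal G_g(\varphi)=\mathcal F_g(\varphi)\circ\alpha_C$ for all $g\colon B\to C$, $\varphi\in\Theta(g)$. A $\Theta$-cokernel of $g\colon B\to C$ is $(\mathcal C(g),c_g\colon C\to\mathcal C(g),\gamma_g\in\Theta(g\cdot c_g))$ such that for every $(D,h\colon C\to D,\varphi\in\Theta(g\cdot h))$ there is a unique $h'$ with $c_g\cdot h'=h$, $\gamma_g\circ h'=\varphi$; it is strong if for every $(D,h\colon\mathcal C(g)\to D,\varphi\in\Theta(c_g\cdot h))$ with $g\circ\varphi=\gamma_g\circ h$ there is a unique $\varphi'\in\Theta(h)$ with $c_g\circ\varphi'=\varphi$. A colimit $\{i_D\}$ of $\mathcal F\colon\mathcal D\to\mathcal B$ is $\Theta$-strong if for every $X$ and family $(\tau^a_D\colon\mathcal FD\to X,\tau^n_D\in\Theta(\tau^a_D))$ with $\mathcal F(g)\cdot\tau^a_{D'}=\tau^a_D$, $\mathcal F(g)\circ\tau^n_{D'}=\tau^n_D$ for all $g\colon D\to D'$, there is a unique $t^n\in\Theta(t^a)$ with $i_D\circ t^n=\tau^n_D$ for all $D$, $t^a$ being the induced arrow. *)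

(* a small self-contained fragment of category theory.
   Composition is written diagrammatically: f · g means first f then g. *)
From Stdlib Require Import ProofIrrelevance FunctionalExtensionality List.

Record Category := {
  Ob :> Type;
  Hom : Ob -> Ob -> Type;
  idm : forall X, Hom X X;
  comp : forall X Y Z, Hom X Y -> Hom Y Z -> Hom X Z;
  comp_id_l : forall X Y (f : Hom X Y), comp X X Y (idm X) f = f;
  comp_id_r : forall X Y (f : Hom X Y), comp X Y Y f (idm Y) = f;
  comp_assoc : forall X Y Z W (f : Hom X Y) (g : Hom Y Z) (h : Hom Z W),
      comp X Z W (comp X Y Z f g) h = comp X Y W f (comp Y Z W g h)
}.
Arguments Hom {c} X Y.
Arguments idm {c} X.
Arguments comp {c X Y Z} f g.
Arguments comp_id_l {c X Y} f.
Arguments comp_id_r {c X Y} f.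
Arguments comp_assoc {c X Y Z W} f g h.
Notation "f · g" := (comp f g) (at level 40, left associativity).

Record Functor (C D : Category) := {
  fobj :> C -> D;
  fmap : forall X Y : C, Hom X Y -> Hom (fobj X) (fobj Y);
  fmap_id : forall X : C, fmap X X (idm X) = idm (fobj X);
  fmap_comp : forall (X Y Z : C) (f : Hom X Y) (g : Hom Y Z),
      fmap X Z (f · g) = fmap X Y f · fmap Y Z g
}.
Arguments fobj {C D} f0 X.
Arguments fmap {C D} f0 {X Y} g.
Arguments fmap_id {C D} f0 X.
Arguments fmap_comp {C D} f0 {X Y Z} f g.

Definition FComp {C D E : Category} (F : Functor C D) (G : Functor D E)
  : Functor C E.
Proof.
  refine {| fobj := fun X => G (F X);
            fmap := fun X Y f => fmap G (fmap F f) |}.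
  - intros X. rewrite fmap_id. apply fmap_id.
  - intros X Y Z f g. rewrite fmap_comp. apply fmap_comp.
Defined.

Definition FId (C : Category) : Functor C C.
Proof.
  refine {| fobj := fun X => X; fmap := fun X Y f => f |}; reflexivity.
Defined.

Record NatTrans {C D : Category} (F G : Functor C D) := {
  ntc :> forall X : C, Hom (F X) (G X);
  ntc_nat : forall (X Y : C) (f : Hom X Y), fmap F f · ntc Y = ntc X · fmap G f
}.
Arguments ntc {C D F G} n X.
Arguments ntc_nat {C D F G} n {X Y} f.

Lemma nt_ext {C D : Category} {F G : Functor C D} (a b : NatTrans F G) :
  (forall X, a X = b X) -> a = b.
Proof.
  destruct a as [a Ha], b as [b Hb]; simpl; intros H.
  assert (a = b) by (apply functional_extensionality_dep; exact H).
  subst b. f_equal. apply proof_irrelevance.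
Qed.

Definition NTId {C D : Category} (F : Functor C D) : NatTrans F F.
Proof.
  refine {| ntc := fun X => idm (F X) |}.
  intros X Y f. rewrite comp_id_l, comp_id_r. reflexivity.
Defined.

Definition NTComp {C D : Category} {F G H : Functor C D}
  (a : NatTrans F G) (b : NatTrans G H) : NatTrans F H.
Proof.
  refine {| ntc := fun X => a X · b X |}.
  intros X Y f. rewrite <- comp_assoc, ntc_nat, comp_assoc, ntc_nat, comp_assoc.
  reflexivity.
Defined.

Definition is_iso {C : Category} {X Y : C} (f : Hom X Y) : Prop :=
  exists g : Hom Y X, f · g = idm X /\ g · f = idm Y.

Definition is_nat_iso {C D : Category} {F G : Functor C D} (a : NatTrans F G)
  : Prop := forall X, is_iso (a X).

Definition is_equivalence_with {C D : Category}
  (Phi : Functor C D) (Psi : Functor D C) : Prop :=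
  (exists eta : NatTrans (FComp Phi Psi) (FId C), is_nat_iso eta) /\
  (exists eps : NatTrans (FComp Psi Phi) (FId D), is_nat_iso eps).

Definition fin_cat (D : Category) : Prop :=
  (exists l : list (Ob D), forall x, In x l) /\
  (forall x y : D, exists l : list (Hom x y), forall f, In f l).

Definition is_cocone {D C : Category} (G : Functor D C) (X : C)
  (i : forall d : D, Hom (G d) X) : Prop :=
  forall (d d' : D) (g : Hom d d'), fmap G g · i d' = i d.

Definition is_colimit {D C : Category} (G : Functor D C) (X : C)
  (i : forall d : D, Hom (G d) X) : Prop :=
  is_cocone G X i /\
  forall (Y : C) (t : forall d : D, Hom (G d) Y), is_cocone G Y t ->
    exists! u : Hom X Y, forall d, i d · u = t d.

Definition has_finite_colimits (C : Category) : Prop :=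
  forall D : Category, fin_cat D -> forall G : Functor D C,
    exists (X : C) (i : forall d : D, Hom (G d) X), is_colimit G X i.

Definition preserves_fin_colimits {C E : Category} (F : Functor C E) : Prop :=
  forall D : Category, fin_cat D -> forall (G : Functor D C) (X : C)
    (i : forall d : D, Hom (G d) X),
    is_colimit G X i -> is_colimit (FComp G F) (F X) (fun d => fmap F (i d)).

(* Two nullhomotopies on possibly different parallel arrows are compared as
   dependent pairs (arrow, nullhomotopy): this is how the equations of the
   paper, which hold up to associativity/unit laws of arrows, are stated. *)
Record NHStruct (C : Category) := {
  Th :> forall X Y : C, Hom X Y -> Type;
  whisk : forall (A B C' D : C) (f : Hom A B) (g : Hom B C') (h : Hom C' D),
      Th B C' g -> Th A D (f · g · h);
  whisk_comp : forall (A' A B C' D D' : C) (f' : Hom A' A) (f : Hom A B)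
      (g : Hom B C') (h : Hom C' D) (h' : Hom D D') (phi : Th B C' g),
      existT (Th A' D') _ (whisk A' B C' D' (f' · f) g (h · h') phi)
      = existT (Th A' D') _ (whisk A' A D D' f' (f · g · h) h'
                                   (whisk A B C' D f g h phi));
  whisk_id : forall (B C' : C) (g : Hom B C') (phi : Th B C' g),
      existT (Th B C') _ (whisk B B C' C' (idm B) g (idm C') phi)
      = existT (Th B C') _ phi
}.
Arguments Th {C} n X Y g.
Arguments whisk {C} n {A B C' D} f g h phi.

Definition heq {C : Category} (T : NHStruct C) {X Y : C} {g g' : Hom X Y}
  (phi : T X Y g) (psi : T X Y g') : Prop :=
  existT (T X Y) g phi = existT (T X Y) g' psi.

Definition lwh {C : Category} (T : NHStruct C) {A B C' : C}
  (f : Hom A B) {g : Hom B C'} (phi : T B C' g) : T A C' (f · g · idm C') :=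
  whisk T f g (idm C') phi.
Definition rwh {C : Category} (T : NHStruct C) {B C' D : C}
  {g : Hom B C'} (phi : T B C' g) (h : Hom C' D) : T B D (idm B · g · h) :=
  whisk T (idm B) g h phi.

Definition reduced_interchange {C : Category} (T : NHStruct C) : Prop :=
  forall (A B C' : C) (f : Hom A B) (g : Hom B C') (a : T A B f) (b : T B C' g),
    heq T (rwh T a g) (lwh T f b).

Definition trTh {C : Category} (T : NHStruct C) {X Y : C} {g g' : Hom X Y}
  (e : g = g') (phi : T X Y g) : T X Y g' :=
  eq_rect g (T X Y) phi g' e.

Record NHMor {C D : Category} (TC : NHStruct C) (TD : NHStruct D) := {
  nhF :> Functor C D;
  nhTh : forall (X Y : C) (g : Hom X Y), TC X Y g -> TD _ _ (fmap nhF g);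
  nhTh_whisk : forall (A B C' D' : C) (f : Hom A B) (g : Hom B C')
      (h : Hom C' D') (phi : TC B C' g),
      heq TD (nhTh A D' (f · g · h) (whisk TC f g h phi))
             (whisk TD (fmap nhF f) (fmap nhF g) (fmap nhF h) (nhTh B C' g phi))
}.
Arguments nhF {C D TC TD} n.
Arguments nhTh {C D TC TD} n {X Y g} phi.

Definition is_2mor {C D : Category} {TC : NHStruct C} {TD : NHStruct D}
  {F G : NHMor TC TD} (a : NatTrans F G) : Prop :=
  forall (B C' : C) (g : Hom B C') (phi : TC B C' g),
    heq TD (lwh TD (a B) (nhTh G phi)) (rwh TD (nhTh F phi) (a C')).

Definition is_Th_cokernel {C : Category} (T : NHStruct C) {X Y : C}
  (g : Hom X Y) (K : C) (c : Hom Y K) (gam : T X K (g · c)) : Prop :=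
  forall (D : C) (h : Hom Y D) (phi : T X D (g · h)),
    exists! h' : Hom K D, c · h' = h /\ heq T (rwh T gam h') phi.

Definition is_strong_Th_cokernel {C : Category} (T : NHStruct C) {X Y : C}
  (g : Hom X Y) (K : C) (c : Hom Y K) (gam : T X K (g · c)) : Prop :=
  is_Th_cokernel T g K c gam /\
  forall (D : C) (h : Hom K D) (phi : T Y D (c · h)),
    heq T (lwh T g phi) (rwh T gam h) ->
    exists! phi' : T K D h, heq T (lwh T c phi') phi.

Definition is_Th_strong_colimit {D C : Category} (T : NHStruct C)
  (G : Functor D C) (X : C) (i : forall d : D, Hom (G d) X) : Prop :=
  forall (Y : C) (ta : forall d : D, Hom (G d) Y) (tn : forall d : D, T _ _ (ta d)),
    (forall (d d' : D) (g : Hom d d'), fmap G g · ta d' = ta d) ->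
    (forall (d d' : D) (g : Hom d d'), heq T (lwh T (fmap G g) (tn d')) (tn d)) ->
    forall t : Hom X Y, (forall d, i d · t = ta d) ->
      exists! tn' : T X Y t, forall d, heq T (lwh T (i d) tn') (tn d).

Definition all_fin_colimits_Th_strong {C : Category} (T : NHStruct C) : Prop :=
  forall D : Category, fin_cat D -> forall (G : Functor D C) (X : C)
    (i : forall d : D, Hom (G d) X), is_colimit G X i -> is_Th_strong_colimit T G X i.

Lemma whisk_heq {C : Category} (T : NHStruct C) {A B C' D : C}
  (f : Hom A B) (h : Hom C' D) {g g' : Hom B C'} (phi : T B C' g) (psi : T B C' g') :
  heq T phi psi -> heq T (whisk T f g h phi) (whisk T f g' h psi).
Proof.
  intros H.
  exact (f_equal (fun p : sigT (T B C') =>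
    existT (T A D) (f · projT1 p · h) (whisk T f (projT1 p) h (projT2 p))) H).
Qed.

Lemma whisk_congr {C : Category} (T : NHStruct C) {A B C' D : C}
  (f f' : Hom A B) (h h' : Hom C' D) (g : Hom B C') (phi : T B C' g) :
  f = f' -> h = h' -> heq T (whisk T f g h phi) (whisk T f' g h' phi).
Proof. intros -> ->. reflexivity. Qed.

Record ArrOb (A : Category) := mkArrOb {
  ar_s : A; ar_t : A; ar : Hom ar_s ar_t }.
Arguments mkArrOb {A ar_s ar_t} ar.
Arguments ar_s {A} a.
Arguments ar_t {A} a.
Arguments ar {A} a.

Definition ArrHom {A : Category} (X Y : ArrOb A) : Type :=
  { p : Hom (ar_s X) (ar_s Y) * Hom (ar_t X) (ar_t Y) |
    ar X · snd p = fst p · ar Y }.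

Lemma ArrHom_ext {A : Category} {X Y : ArrOb A} (u v : ArrHom X Y) :
  proj1_sig u = proj1_sig v -> u = v.
Proof.
  destruct u as [u Hu], v as [v Hv]; simpl; intros ->. f_equal.
  apply proof_irrelevance.
Qed.

Definition ArrId {A : Category} (X : ArrOb A) : ArrHom X X.
Proof.
  exists (idm (ar_s X), idm (ar_t X)); simpl.
  rewrite comp_id_l, comp_id_r. reflexivity.
Defined.

Definition ArrComp {A : Category} {X Y Z : ArrOb A}
  (u : ArrHom X Y) (v : ArrHom Y Z) : ArrHom X Z.
Proof.
  exists (fst (proj1_sig u) · fst (proj1_sig v), snd (proj1_sig u) · snd (proj1_sig v)).
  simpl. destruct u as [[u1 u2] Hu], v as [[v1 v2] Hv]; simpl in *.
  rewrite <- comp_assoc, Hu, comp_assoc, Hv, comp_assoc. reflexivity.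
Defined.

Definition Arr (A : Category) : Category.
Proof.
  refine {| Ob := ArrOb A; Hom := @ArrHom A; idm := @ArrId A;
            comp := fun X Y Z u v => ArrComp u v |}.
  - intros X Y [[f1 f2] Hf]. apply ArrHom_ext; simpl.
    rewrite !comp_id_l. reflexivity.
  - intros X Y [[f1 f2] Hf]. apply ArrHom_ext; simpl.
    rewrite !comp_id_r. reflexivity.
  - intros X Y Z W [[f1 f2] Hf] [[g1 g2] Hg] [[h1 h2] Hh]. apply ArrHom_ext; simpl.
    rewrite !comp_assoc. reflexivity.
Defined.

Definition ThD {A : Category} (X Y : ArrOb A) (g : ArrHom X Y) : Type :=
  { phi : Hom (ar_t X) (ar_s Y) |
    ar X · phi = fst (proj1_sig g) /\ phi · ar Y = snd (proj1_sig g) }.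

Definition ThD_whisk {A : Category} (X Y Z W : ArrOb A) (f : ArrHom X Y)
  (g : ArrHom Y Z) (h : ArrHom Z W) (phi : ThD Y Z g)
  : ThD X W (ArrComp (ArrComp f g) h).
Proof.
  exists (snd (proj1_sig f) · proj1_sig phi · fst (proj1_sig h)).
  destruct f as [[f1 f2] Hf], g as [[g1 g2] Hg], h as [[h1 h2] Hh],
    phi as [p [Hp1 Hp2]]; simpl in *.
  split.
  - rewrite <- !comp_assoc, Hf, (comp_assoc f1), Hp1. reflexivity.
  - rewrite (comp_assoc (f2 · p) h1 (ar W)), <- Hh, <- (comp_assoc (f2 · p) (ar Z) h2), (comp_assoc f2 p (ar Z)), Hp2. reflexivity.
Defined.

Lemma ThD_heq {A : Category} {X Y : ArrOb A} (g g' : ArrHom X Y)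
  (phi : ThD X Y g) (psi : ThD X Y g') :
  g = g' -> proj1_sig phi = proj1_sig psi ->
  existT (ThD X Y) g phi = existT (ThD X Y) g' psi.
Proof.
  intros <- E. destruct phi as [p Hp], psi as [q Hq]; simpl in E; subst q.
  f_equal. f_equal. apply proof_irrelevance.
Qed.

Definition ThDelta (A : Category) : NHStruct (Arr A).
Proof.
  refine (Build_NHStruct (Arr A) (@ThD A) (@ThD_whisk A) _ _).
  - intros. apply ThD_heq.
    + rewrite !comp_assoc. reflexivity.
    + destruct f', f, h, h', phi; simpl. rewrite !comp_assoc. reflexivity.
  - intros. apply ThD_heq.
    + rewrite comp_id_l, comp_id_r. reflexivity.
    + destruct phi; simpl. rewrite comp_id_l, comp_id_r. reflexivity.
Defined.

Definition GammaHom (A : Category) (I : A) (iI : forall X : A, Hom I X)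
  (HI : forall (X : A) (f : Hom I X), f = iI X) (X Y : A) (g0 : Hom X Y)
  : ArrHom (@mkArrOb A I X (iI X)) (@mkArrOb A I Y (iI Y)).
Proof.
  exists (idm I, g0). simpl.
  rewrite (HI _ (iI X · g0)), (HI _ (idm I · iI Y)). reflexivity.
Defined.

Definition GammaF (A : Category) (I : A) (iI : forall X : A, Hom I X)
  (HI : forall (X : A) (f : Hom I X), f = iI X) : Functor A (Arr A).
Proof.
  refine (Build_Functor A (Arr A) (fun X => @mkArrOb A I X (iI X))
            (GammaHom A I iI HI) _ _).
  - intros X. apply ArrHom_ext. reflexivity.
  - intros X Y Z f g. apply ArrHom_ext. simpl. rewrite comp_id_l. reflexivity.
Defined.

Lemma GammaF_pres (A : Category) (I : A) (iI : forall X : A, Hom I X)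
  (HI : forall (X : A) (f : Hom I X), f = iI X)
  (D : Category) (G : Functor D A) (X : A) (i : forall d : D, Hom (G d) X) :
  is_colimit G X i ->
  is_colimit (FComp G (GammaF A I iI HI)) (GammaF A I iI HI X)
             (fun d => fmap (GammaF A I iI HI) (i d)).
Proof.
  intros [Hc Hu]. split.
  - intros d d' g. rewrite <- (Hc d d' g).
    exact (eq_sym (fmap_comp (GammaF A I iI HI) (fmap G g) (i d'))).
  - intros Y t Ht.
    set (t2 := fun d => snd (proj1_sig (t d))).
    assert (Ht2 : is_cocone G (ar_t Y) t2).
    { intros d d' g. unfold t2. rewrite <- (Ht d d' g). reflexivity. }
    destruct (Hu _ _ Ht2) as [u [Hu1 Hu2]].
    assert (Hp : ar (GammaF A I iI HI X) · snd (iI (ar_s Y), u)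
                 = fst (iI (ar_s Y), u) · ar Y).
    { simpl. rewrite (HI _ (iI X · u)), (HI _ (iI (ar_s Y) · ar Y)). reflexivity. }
    exists (exist _ (iI (ar_s Y), u) Hp). split.
    + intros d. apply ArrHom_ext. simpl.
      specialize (Hu1 d). unfold t2 in Hu1.
      destruct (t d) as [[a b] Hab]; simpl in *. rewrite Hu1.
      rewrite (HI _ (idm I · iI (ar_s Y))), (HI _ a). reflexivity.
    + intros [[p q] Hpq] Hx. apply ArrHom_ext. simpl.
      rewrite (HI _ p). f_equal. apply Hu2. intros d.
      unfold t2. rewrite <- (Hx d). reflexivity.
Qed.

Definition ColimOb (A B : Category) : Type :=
  { F : Functor A B | preserves_fin_colimits F }.

Definition ColimCat (A B : Category) : Category.
Proof.
  refine {| Ob := ColimOb A B;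
            Hom := fun F G => NatTrans (proj1_sig F) (proj1_sig G);
            idm := fun F => NTId (proj1_sig F);
            comp := fun F G H a b => NTComp a b |}.
  - intros. apply nt_ext. intros; simpl. apply comp_id_l.
  - intros. apply nt_ext. intros; simpl. apply comp_id_r.
  - intros. apply nt_ext. intros; simpl. apply comp_assoc.
Defined.

Definition preserves_cokernels {A B : Category} {T : NHStruct B}
  (M : NHMor (ThDelta A) T) : Prop :=
  forall (X Y : Arr A) (g : Hom X Y) (K : Arr A) (c : Hom Y K)
    (gam : ThDelta A X K (g · c)),
    is_Th_cokernel (ThDelta A) g K c gam ->
    is_Th_cokernel T (fmap M g) (M K) (fmap M c)
      (trTh T (fmap_comp (nhF M) g c) (nhTh M gam)).

Definition HCOb (A B : Category) (T : NHStruct B) : Type :=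
  { M : NHMor (ThDelta A) T | preserves_fin_colimits (nhF M) /\ preserves_cokernels M }.

Definition TwoMor {A B : Category} {T : NHStruct B} (M N : HCOb A B T) : Type :=
  { a : NatTrans (nhF (proj1_sig M)) (nhF (proj1_sig N)) | is_2mor a }.

Lemma TwoMor_ext {A B : Category} {T : NHStruct B} {M N : HCOb A B T}
  (u v : TwoMor M N) : proj1_sig u = proj1_sig v -> u = v.
Proof.
  destruct u, v; simpl; intros ->. f_equal. apply proof_irrelevance.
Qed.

Lemma is_2mor_id {C D : Category} {TC : NHStruct C} {TD : NHStruct D}
  (F : NHMor TC TD) : is_2mor (NTId (nhF F)).
Proof. intros B C' g phi. reflexivity. Qed.

Lemma is_2mor_comp {C D : Category} {TC : NHStruct C} {TD : NHStruct D}
  {F G H : NHMor TC TD} (a : NatTrans F G) (b : NatTrans G H) :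
  is_2mor a -> is_2mor b -> is_2mor (NTComp a b).
Proof.
  intros Ha Hb B C' g phi. unfold lwh, rwh; simpl.
  eapply eq_trans.
  { apply (whisk_congr TD (a B · b B) (a B · b B) (idm (H C')) (idm (H C') · idm (H C'))).
    - reflexivity.
    - symmetry; apply comp_id_l. }
  eapply eq_trans. { apply whisk_comp. }
  eapply eq_trans. { apply whisk_heq. apply Hb. }
  eapply eq_trans. { symmetry. apply whisk_comp. }
  eapply eq_trans.
  { apply (whisk_congr TD (a B · idm (G B)) (idm (F B) · a B)
                          (b C' · idm (H C')) (idm (G C') · b C')).
    - rewrite comp_id_l, comp_id_r. reflexivity.
    - rewrite comp_id_l, comp_id_r. reflexivity. }
  eapply eq_trans. { apply whisk_comp. }
  eapply eq_trans. { apply whisk_heq. apply Ha. }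
  eapply eq_trans. { symmetry. apply whisk_comp. }
  apply whisk_congr; [apply comp_id_l | reflexivity].
Qed.

Definition HCCat (A B : Category) (T : NHStruct B) : Category.
Proof.
  refine {| Ob := HCOb A B T;
            Hom := @TwoMor A B T;
            idm := fun M => exist _ (NTId _) (is_2mor_id (proj1_sig M));
            comp := fun M N P a b => exist _ (NTComp (proj1_sig a) (proj1_sig b))
                       (is_2mor_comp _ _ (proj2_sig a) (proj2_sig b)) |}.
  - intros. apply TwoMor_ext, nt_ext. intros; simpl. apply comp_id_l.
  - intros. apply TwoMor_ext, nt_ext. intros; simpl. apply comp_id_r.
  - intros. apply TwoMor_ext, nt_ext. intros; simpl. apply comp_assoc.
Defined.

Definition NTWhiskL {C D E : Category} (K : Functor C D) {F G : Functor D E}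
  (a : NatTrans F G) : NatTrans (FComp K F) (FComp K G).
Proof.
  refine (Build_NatTrans C E (FComp K F) (FComp K G) (fun X => a (K X)) _).
  intros X Y f. exact (ntc_nat a (fmap K f)).
Defined.

Definition PreGamma_obj (A B : Category) (T : NHStruct B) (I : A)
  (iI : forall X : A, Hom I X) (HI : forall (X : A) (f : Hom I X), f = iI X)
  (M : HCOb A B T) : ColimOb A B.
Proof.
  exists (FComp (GammaF A I iI HI) (nhF (proj1_sig M))).
  intros D HD G X i Hi.
  exact (proj1 (proj2_sig M) D HD _ _ _ (GammaF_pres A I iI HI D G X i Hi)).
Defined.

Definition PreGamma (A B : Category) (T : NHStruct B) (I : A)
  (iI : forall X : A, Hom I X) (HI : forall (X : A) (f : Hom I X), f = iI X)
  : Functor (HCCat A B T) (ColimCat A B).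
Proof.
  refine (Build_Functor (HCCat A B T) (ColimCat A B) (PreGamma_obj A B T I iI HI)
    (fun M N a => NTWhiskL (GammaF A I iI HI) (proj1_sig a)) _ _).
  - intros M. apply nt_ext. reflexivity.
  - intros M N P a b. apply nt_ext. reflexivity.
Defined.

(* A finite-colimit-preserving [F : A -> B] is extended to [Arr A] by sending
   [(A, a, A0)] to a chosen strong Theta-cokernel of [F a]; its action on arrows
   and on Theta_Delta-nullhomotopies comes from the universal property of these
   cokernels, strongness and reduced interchange making it a morphism of
   categories with nullhomotopies. It preserves finite colimits because those of
   [Arr A] are computed componentwise and colimits in [B] are Theta-strong, and
   it preserves cokernels because a Theta_Delta-cokernel of [(g1, g0)] is built
   from a pushout in [A], which [F] preserves. Conversely every [a] is the
   Theta_Delta-cokernel of [Gamma a], so a cokernel-preserving [M] is the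
   extension of [Gamma · M]; and [Gamma · F^] is isomorphic to [F] because
   [F] of the initial object is (Theta-strongly) initial. *)

From Stdlib Require Import List ProofIrrelevance IndefiniteDescription Bool.

(* Nullhomotopies are handled packed with the arrow they are a nullhomotopy of
   (as elements of [sigT (T X Y)]): the laws of [NHStruct] then become plain
   equations, and rewriting never has to transport along equalities of arrows. *)
Section PackedNullhomotopies.
Context {C : Category} (T : NHStruct C).

Definition NH (X Y : C) : Type := sigT (T X Y).
Definition pack {X Y : C} {g : Hom X Y} (phi : T X Y g) : NH X Y := existT _ g phi.
Definition wh {A B C' D : C} (f : Hom A B) (s : NH B C') (h : Hom C' D) : NH A D :=
  pack (whisk T f (projT1 s) h (projT2 s)).
Definition lw {A B C' : C} (f : Hom A B) (s : NH B C') : NH A C' := wh f s (idm C').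
Definition rw {B C' D : C} (s : NH B C') (h : Hom C' D) : NH B D := wh (idm B) s h.

Lemma pack_lwh {A B C' : C} (f : Hom A B) {g : Hom B C'} (phi : T B C' g) :
  pack (lwh T f phi) = lw f (pack phi).
Proof. reflexivity. Qed.

Lemma pack_rwh {B C' D : C} {g : Hom B C'} (phi : T B C' g) (h : Hom C' D) :
  pack (rwh T phi h) = rw (pack phi) h.
Proof. reflexivity. Qed.

Lemma pack_trTh {X Y : C} {g g' : Hom X Y} (e : g = g') (phi : T X Y g) :
  pack (trTh T e phi) = pack phi.
Proof. destruct e; reflexivity. Qed.

Lemma heq_pack {X Y : C} {g g' : Hom X Y} (phi : T X Y g) (psi : T X Y g') :
  heq T phi psi = (pack phi = pack psi).
Proof. reflexivity. Qed.

Lemma pack_projT2 {X Y : C} (s : NH X Y) : pack (projT2 s) = s.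
Proof. destruct s; reflexivity. Qed.

Lemma wh_comp {A' A B C' D D' : C} (f' : Hom A' A) (f : Hom A B) (s : NH B C')
  (h : Hom C' D) (h' : Hom D D') : wh (f' · f) s (h · h') = wh f' (wh f s h) h'.
Proof. destruct s as [g phi]. apply whisk_comp. Qed.

Lemma wh_id {B C' : C} (s : NH B C') : wh (idm B) s (idm C') = s.
Proof. destruct s as [g phi]. apply whisk_id. Qed.

Lemma lw_comp {A0 A B C' : C} (f : Hom A0 A) (f' : Hom A B) (s : NH B C') :
  lw f (lw f' s) = lw (f · f') s.
Proof. unfold lw. rewrite <- wh_comp, comp_id_l. reflexivity. Qed.

Lemma rw_comp {B C' D E : C} (s : NH B C') (h : Hom C' D) (h' : Hom D E) :
  rw (rw s h) h' = rw s (h · h').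
Proof. unfold rw. rewrite <- wh_comp, comp_id_l. reflexivity. Qed.

Lemma lw_rw {A B C' D : C} (f : Hom A B) (s : NH B C') (h : Hom C' D) :
  lw f (rw s h) = rw (lw f s) h.
Proof. unfold lw, rw. rewrite <- !wh_comp, !comp_id_l, !comp_id_r. reflexivity. Qed.

Lemma lw_id {B C' : C} (s : NH B C') : lw (idm B) s = s.
Proof. apply wh_id. Qed.

Lemma rw_id {B C' : C} (s : NH B C') : rw s (idm C') = s.
Proof. apply wh_id. Qed.

Lemma wh_lw_rw {A B C' D : C} (f : Hom A B) (s : NH B C') (h : Hom C' D) :
  wh f s h = lw f (rw s h).
Proof. unfold lw, rw. rewrite <- wh_comp, !comp_id_r. reflexivity. Qed.

Lemma lw_arrow {A B C' : C} (f : Hom A B) (s : NH B C') :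
  projT1 (lw f s) = f · projT1 s · idm C'.
Proof. reflexivity. Qed.

Lemma rw_arrow {B C' D : C} (s : NH B C') (h : Hom C' D) :
  projT1 (rw s h) = idm B · projT1 s · h.
Proof. reflexivity. Qed.

Lemma rw_lw_interchange (HRI : reduced_interchange T) {A B C' : C}
  (s : NH A B) (t : NH B C') : rw s (projT1 t) = lw (projT1 s) t.
Proof. destruct s as [f a], t as [g b]. apply (HRI _ _ _ f g a b). Qed.

End PackedNullhomotopies.

Arguments NH {C} T X Y.
Arguments pack {C T X Y g} phi.
Arguments wh {C T A B C' D} f s h.
Arguments lw {C T A B C'} f s.
Arguments rw {C T B C' D} s h.

Section MorphismOnPacked.
Context {C D : Category} {TC : NHStruct C} {TD : NHStruct D} (M : NHMor TC TD).

Definition nhmap {X Y : C} (s : NH TC X Y) : NH TD (M X) (M Y) := pack (nhTh M (projT2 s)).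

Lemma nhmap_wh {A B C' D' : C} (f : Hom A B) (s : NH TC B C') (h : Hom C' D') :
  nhmap (wh f s h) = wh (fmap M f) (nhmap s) (fmap M h).
Proof. destruct s as [g phi]. apply nhTh_whisk. Qed.

Lemma nhmap_lw {A B C' : C} (f : Hom A B) (s : NH TC B C') :
  nhmap (lw f s) = lw (fmap M f) (nhmap s).
Proof. unfold lw. rewrite nhmap_wh, fmap_id. reflexivity. Qed.

Lemma nhmap_rw {B C' D' : C} (s : NH TC B C') (h : Hom C' D') :
  nhmap (rw s h) = rw (nhmap s) (fmap M h).
Proof. unfold rw. rewrite nhmap_wh, fmap_id. reflexivity. Qed.

End MorphismOnPacked.
Arguments nhmap {C D TC TD} M {X Y} s.

Section Cokernels.
Context {C : Category} (T : NHStruct C).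

Lemma coker_hom_ext {X Y K : C} {g : Hom X Y} {c : Hom Y K} {gam : T X K (g · c)}
  (H : is_Th_cokernel T g K c gam) {D : C} (h1 h2 : Hom K D) :
  c · h1 = c · h2 -> rw (pack gam) h1 = rw (pack gam) h2 -> h1 = h2.
Proof.
  intros E1 E2.
  assert (e : idm X · (g · c) · h1 = g · (c · h1)).
  { rewrite comp_id_l, comp_assoc. reflexivity. }
  destruct (H D (c · h1) (trTh T e (rwh T gam h1))) as [h' [_ Hu]].
  assert (A1 : h' = h1).
  { apply Hu. split; [reflexivity|]. rewrite heq_pack, pack_trTh. reflexivity. }
  assert (A2 : h' = h2).
  { apply Hu. split; [symmetry; exact E1|].
    rewrite heq_pack, pack_trTh, pack_rwh. symmetry. exact E2. }
  congruence.
Qed.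

Lemma coker_desc_ex {X Y K : C} {g : Hom X Y} {c : Hom Y K} {gam : T X K (g · c)}
  (H : is_Th_cokernel T g K c gam) {D : C} (h : Hom Y D) (s : NH T X D) :
  projT1 s = g · h -> exists h' : Hom K D, c · h' = h /\ rw (pack gam) h' = s.
Proof.
  destruct s as [a phi]; simpl; intros e; subst a.
  destruct (H D h phi) as [h' [[H1 H2] _]]. exists h'. split; [exact H1|exact H2].
Qed.

Definition coker_desc {X Y K : C} {g : Hom X Y} {c : Hom Y K} {gam : T X K (g · c)}
  (H : is_Th_cokernel T g K c gam) {D : C} (h : Hom Y D) (s : NH T X D)
  (e : projT1 s = g · h) : Hom K D :=
  proj1_sig (constructive_indefinite_description _ (coker_desc_ex H h s e)).

Lemma coker_desc_spec {X Y K : C} {g : Hom X Y} {c : Hom Y K} {gam : T X K (g · c)}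
  (H : is_Th_cokernel T g K c gam) {D : C} (h : Hom Y D) (s : NH T X D)
  (e : projT1 s = g · h) :
  c · coker_desc H h s e = h /\ rw (pack gam) (coker_desc H h s e) = s.
Proof. unfold coker_desc. destruct constructive_indefinite_description as [x Hx]. exact Hx. Qed.

Lemma coker_comparison_inv {X Y K K' : C} {g : Hom X Y}
  {c : Hom Y K} {gam : T X K (g · c)} {c' : Hom Y K'} {gam' : T X K' (g · c')}
  (H : is_Th_cokernel T g K c gam) (H' : is_Th_cokernel T g K' c' gam')
  (th : Hom K K') (th' : Hom K' K)
  (E1 : c · th = c') (E2 : rw (pack gam) th = pack gam')
  (F1 : c' · th' = c) (F2 : rw (pack gam') th' = pack gam) :
  th · th' = idm K /\ th' · th = idm K'.
Proof.
  split.
  - apply (coker_hom_ext H).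
    + rewrite <- comp_assoc, E1, F1, comp_id_r. reflexivity.
    + rewrite <- rw_comp, E2, F2, rw_id. reflexivity.
  - apply (coker_hom_ext H').
    + rewrite <- comp_assoc, F1, E1, comp_id_r. reflexivity.
    + rewrite <- rw_comp, F2, E2, rw_id. reflexivity.
Qed.

Lemma coker_unique_up_to_iso {X Y K K' : C} {g : Hom X Y}
  {c : Hom Y K} {gam : T X K (g · c)} {c' : Hom Y K'} {gam' : T X K' (g · c')}
  (H : is_Th_cokernel T g K c gam) (H' : is_Th_cokernel T g K' c' gam') :
  exists (th : Hom K' K) (th' : Hom K K'),
    c' · th = c /\ rw (pack gam') th = pack gam /\ th · th' = idm K' /\ th' · th = idm K.
Proof.
  destruct (coker_desc_ex H' c (pack gam) eq_refl) as [th [E1 E2]].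
  destruct (coker_desc_ex H c' (pack gam') eq_refl) as [th' [F1 F2]].
  exists th, th'. split; [exact E1|]. split; [exact E2|].
  exact (coker_comparison_inv H' H th th' E1 E2 F1 F2).
Qed.

Lemma coker_transport_iso {X Y K K' : C} {g : Hom X Y}
  {c : Hom Y K} {gam : T X K (g · c)} {c' : Hom Y K'} {gam' : T X K' (g · c')}
  (H' : is_Th_cokernel T g K' c' gam') (th : Hom K' K) (th' : Hom K K')
  (E1 : c' · th = c) (E2 : rw (pack gam') th = pack gam)
  (I1 : th · th' = idm K') (I2 : th' · th = idm K) :
  is_Th_cokernel T g K c gam.
Proof.
  intros D h phi.
  destruct (coker_desc_ex H' h (pack phi) eq_refl) as [h0 [H1 H2]].
  exists (th' · h0). split; [split|].
  - rewrite <- E1, comp_assoc, <- (comp_assoc th), I1, comp_id_l. exact H1.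
  - rewrite heq_pack, pack_rwh, <- E2, rw_comp, <- comp_assoc, I1, comp_id_l. exact H2.
  - intros h'' [Hh1 Hh2]. rewrite heq_pack, pack_rwh in Hh2.
    assert (E : th · h'' = h0).
    { apply (coker_hom_ext H').
      + rewrite <- comp_assoc, E1, Hh1, H1. reflexivity.
      + rewrite <- rw_comp, E2, Hh2, H2. reflexivity. }
    rewrite <- E, <- comp_assoc, I2, comp_id_l. reflexivity.
Qed.

Context (HRI : reduced_interchange T).

Lemma strong_coker_nh_ext {X Y K : C} {g : Hom X Y} {c : Hom Y K} {gam : T X K (g · c)}
  (H : is_strong_Th_cokernel T g K c gam) {D : C} (s1 s2 : NH T K D) :
  projT1 s1 = projT1 s2 -> lw c s1 = lw c s2 -> s1 = s2.
Proof.
  destruct s1 as [h phi1], s2 as [h' phi2]; simpl; intros e E; subst h'.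
  assert (e1 : c · h · idm D = c · h) by apply comp_id_r.
  (* the compatibility hypothesis of strongness is an instance of reduced interchange *)
  destruct (proj2 H D h (trTh T e1 (lwh T c phi1))) as [p [_ Hu]].
  { rewrite heq_pack, pack_lwh, pack_trTh, pack_lwh, lw_comp, pack_rwh.
    symmetry. exact (rw_lw_interchange T HRI (pack gam) (pack phi1)). }
  assert (A1 : p = phi1).
  { apply Hu. rewrite heq_pack, pack_trTh. reflexivity. }
  assert (A2 : p = phi2).
  { apply Hu. rewrite heq_pack, pack_trTh, pack_lwh, pack_lwh. symmetry. exact E. }
  subst. reflexivity.
Qed.

Lemma strong_coker_nh_ex {X Y K : C} {g : Hom X Y} {c : Hom Y K} {gam : T X K (g · c)}
  (H : is_strong_Th_cokernel T g K c gam) {D : C} (h : Hom K D) (s : NH T Y D) :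
  projT1 s = c · h -> lw g s = rw (pack gam) h -> exists phi : T K D h, lw c (pack phi) = s.
Proof.
  destruct s as [a phi]; simpl; intros e E; subst a.
  destruct (proj2 H D h phi E) as [p [Hp _]]. exists p. exact Hp.
Qed.

Definition strong_coker_nh_desc {X Y K : C} {g : Hom X Y} {c : Hom Y K}
  {gam : T X K (g · c)} (H : is_strong_Th_cokernel T g K c gam) {D : C}
  (h : Hom K D) (s : NH T Y D) (e : projT1 s = c · h) (E : lw g s = rw (pack gam) h)
  : T K D h :=
  proj1_sig (constructive_indefinite_description _ (strong_coker_nh_ex H h s e E)).

Lemma strong_coker_nh_desc_spec {X Y K : C} {g : Hom X Y} {c : Hom Y K}
  {gam : T X K (g · c)} (H : is_strong_Th_cokernel T g K c gam) {D : C}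
  (h : Hom K D) (s : NH T Y D) (e : projT1 s = c · h) (E : lw g s = rw (pack gam) h) :
  lw c (pack (strong_coker_nh_desc H h s e E)) = s.
Proof.
  unfold strong_coker_nh_desc. destruct constructive_indefinite_description as [x Hx].
  exact Hx.
Qed.

End Cokernels.

Section StrongColimits.
Context {D C : Category} (T : NHStruct C) (G : Functor D C) (X : C)
  (i : forall d : D, Hom (G d) X) (Hc : is_cocone G X i)
  (H : is_Th_strong_colimit T G X i).

Lemma strong_colim_nh_ext {Y : C} (s1 s2 : NH T X Y) :
  projT1 s1 = projT1 s2 -> (forall d, lw (i d) s1 = lw (i d) s2) -> s1 = s2.
Proof.
  destruct s1 as [t phi1], s2 as [t' phi2]; simpl; intros e E; subst t'.
  assert (C1 : forall (d d' : D) (g : Hom d d'), fmap G g · (i d' · t) = i d · t).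
  { intros d d' g. rewrite <- comp_assoc, Hc. reflexivity. }
  assert (C2 : forall (d d' : D) (g : Hom d d'),
    heq T (lwh T (fmap G g) (trTh T (comp_id_r _) (lwh T (i d') phi1)))
          (trTh T (comp_id_r _) (lwh T (i d) phi1))).
  { intros d d' g. rewrite heq_pack, pack_lwh, !pack_trTh, !pack_lwh, lw_comp, Hc.
    reflexivity. }
  destruct (H Y (fun d => i d · t) (fun d => trTh T (comp_id_r _) (lwh T (i d) phi1))
              C1 C2 t (fun d => eq_refl)) as [p [_ Hu]].
  assert (A1 : p = phi1).
  { apply Hu. intros d. rewrite heq_pack, pack_trTh. reflexivity. }
  assert (A2 : p = phi2).
  { apply Hu. intros d. rewrite heq_pack, pack_trTh, !pack_lwh. symmetry. exact (E d). }
  subst. reflexivity.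
Qed.

Lemma strong_colim_nh_ex {Y : C} (t : Hom X Y) (tn : forall d, NH T (G d) Y) :
  (forall d, projT1 (tn d) = i d · t) ->
  (forall d d' (g : Hom d d'), lw (fmap G g) (tn d') = tn d) ->
  exists phi : T X Y t, forall d, lw (i d) (pack phi) = tn d.
Proof.
  intros e E.
  assert (C1 : forall (d d' : D) (g : Hom d d'), fmap G g · (i d' · t) = i d · t).
  { intros d d' g. rewrite <- comp_assoc, Hc. reflexivity. }
  assert (C2 : forall (d d' : D) (g : Hom d d'),
    heq T (lwh T (fmap G g) (trTh T (e d') (projT2 (tn d'))))
          (trTh T (e d) (projT2 (tn d)))).
  { intros d d' g. rewrite heq_pack, pack_lwh, !pack_trTh, !pack_projT2. apply E. }
  destruct (H Y (fun d => i d · t) (fun d => trTh T (e d) (projT2 (tn d))) C1 C2 t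
              (fun d => eq_refl)) as [p [Hp _]].
  exists p. intros d. specialize (Hp d).
  rewrite heq_pack, pack_lwh, pack_trTh, pack_projT2 in Hp. exact Hp.
Qed.

End StrongColimits.

Section Colimits.
Context {D C : Category} (G : Functor D C).

Lemma colim_hom_ext {X : C} {i : forall d : D, Hom (G d) X} (H : is_colimit G X i)
  {Y : C} (u v : Hom X Y) : (forall d, i d · u = i d · v) -> u = v.
Proof.
  intros E. destruct H as [Hc Hu].
  destruct (Hu Y (fun d => i d · u)) as [w [_ Hw]].
  { intros d d' g. rewrite <- comp_assoc, Hc. reflexivity. }
  transitivity w; [symmetry|]; apply Hw; intros d; [reflexivity| symmetry; apply E].
Qed.

Lemma colim_desc_ex {X : C} {i : forall d : D, Hom (G d) X} (H : is_colimit G X i)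
  {Y : C} (t : forall d, Hom (G d) Y) : is_cocone G Y t ->
  exists u : Hom X Y, forall d, i d · u = t d.
Proof.
  intros Ht. destruct (proj2 H Y t Ht) as [u [Hu _]]. exists u. exact Hu.
Qed.

Lemma colim_unique_up_to_iso {X Z : C} {i : forall d : D, Hom (G d) X}
  {j : forall d : D, Hom (G d) Z} (HX : is_colimit G X i) (HZ : is_colimit G Z j) :
  exists (u : Hom X Z) (v : Hom Z X), (forall d, i d · u = j d) /\
    (forall d, j d · v = i d) /\ u · v = idm X /\ v · u = idm Z.
Proof.
  destruct (colim_desc_ex HX j (proj1 HZ)) as [u Hu].
  destruct (colim_desc_ex HZ i (proj1 HX)) as [v Hv].
  exists u, v. split; [exact Hu|]. split; [exact Hv|]. split.
  - apply (colim_hom_ext HX). intros d. rewrite <- comp_assoc, Hu, Hv, comp_id_r.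
    reflexivity.
  - apply (colim_hom_ext HZ). intros d. rewrite <- comp_assoc, Hv, Hu, comp_id_r.
    reflexivity.
Qed.

Lemma colim_transport_iso {X : C} {i : forall d : D, Hom (G d) X} (H : is_colimit G X i)
  {Z : C} (j : forall d, Hom (G d) Z) (u : Hom X Z) (v : Hom Z X)
  (Hj : forall d, i d · u = j d) (Hv : forall d, j d · v = i d)
  (uv : u · v = idm X) (vu : v · u = idm Z) : is_colimit G Z j.
Proof.
  split.
  - intros d d' g. rewrite <- !Hj, <- comp_assoc, (proj1 H). reflexivity.
  - intros Y t Ht. destruct (colim_desc_ex H t Ht) as [w Hw].
    exists (v · w). split.
    + intros d. rewrite <- comp_assoc, Hv. apply Hw.
    + intros m Hm. assert (E : u · m = w).
      { apply (colim_hom_ext H). intros d. rewrite <- comp_assoc, Hj, Hw. apply Hm. }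
      rewrite <- E, <- comp_assoc, vu, comp_id_l. reflexivity.
Qed.

End Colimits.

Lemma colim_image_transport_iso {D C E : Category} (G : Functor D C) (P : Functor C E)
  {X Z : C} (i : forall d : D, Hom (G d) X) (j : forall d : D, Hom (G d) Z)
  (u : Hom X Z) (v : Hom Z X) (Hu : forall d, i d · u = j d) (Hv : forall d, j d · v = i d)
  (uv : u · v = idm X) (vu : v · u = idm Z) :
  is_colimit (FComp G P) (P Z) (fun d => fmap P (j d)) ->
  is_colimit (FComp G P) (P X) (fun d => fmap P (i d)).
Proof.
  intros HZ. apply (colim_transport_iso _ HZ _ (fmap P v) (fmap P u)).
  - intros d. etransitivity; [symmetry; apply (fmap_comp P)|]. rewrite Hv. reflexivity.
  - intros d. etransitivity; [symmetry; apply (fmap_comp P)|]. rewrite Hu. reflexivity.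
  - rewrite <- fmap_comp, vu. apply fmap_id.
  - rewrite <- fmap_comp, uv. apply fmap_id.
Qed.

Lemma ArrHom_square {A : Category} {X Y : Arr A} (u : Hom X Y) :
  ar X · snd (proj1_sig u) = fst (proj1_sig u) · ar Y.
Proof. exact (proj2_sig u). Qed.

Lemma ArrHom_eq {A : Category} {X Y : Arr A} (u v : Hom X Y) :
  fst (proj1_sig u) = fst (proj1_sig v) -> snd (proj1_sig u) = snd (proj1_sig v) -> u = v.
Proof.
  intros E1 E2. apply ArrHom_ext. destruct u as [[u1 u2] Hu], v as [[v1 v2] Hv].
  simpl in *. subst. reflexivity.
Qed.

Definition dom_functor (A : Category) : Functor (Arr A) A.
Proof.
  refine {| fobj := fun X : Arr A => ar_s X;
            fmap := fun X Y (u : Hom X Y) => fst (proj1_sig u) |}; reflexivity.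
Defined.

Definition cod_functor (A : Category) : Functor (Arr A) A.
Proof.
  refine {| fobj := fun X : Arr A => ar_t X;
            fmap := fun X Y (u : Hom X Y) => snd (proj1_sig u) |}; reflexivity.
Defined.

Section ArrColimitOfComponents.
Context {A D : Category} (G : Functor D (Arr A))
  (S0 : A) (s : forall d, Hom (ar_s (G d)) S0) (HS : is_colimit (FComp G (dom_functor A)) S0 s)
  (T0 : A) (t : forall d, Hom (ar_t (G d)) T0) (HT : is_colimit (FComp G (cod_functor A)) T0 t)
  (x : Hom S0 T0) (Hx : forall d, s d · x = ar (G d) · t d).

Definition arr_colim_inj (d : D) : Hom (G d) (mkArrOb x) :=
  exist _ (s d, t d) (eq_sym (Hx d)).

Lemma arr_colim_of_components : is_colimit G (mkArrOb x) arr_colim_inj.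
Proof.
  split.
  - intros d d' g. apply ArrHom_eq; [exact (proj1 HS d d' g) | exact (proj1 HT d d' g)].
  - intros Y tau Htau.
    destruct (colim_desc_ex _ HS (fun d => fst (proj1_sig (tau d)))) as [w1 Hw1].
    { intros d d' g. simpl. rewrite <- (Htau d d' g). reflexivity. }
    destruct (colim_desc_ex _ HT (fun d => snd (proj1_sig (tau d)))) as [w2 Hw2].
    { intros d d' g. simpl. rewrite <- (Htau d d' g). reflexivity. }
    assert (Hsq : x · w2 = w1 · ar Y).
    { apply (colim_hom_ext _ HS). intros d. cbn in Hw1, Hw2 |- *.
      rewrite <- !comp_assoc, Hx, Hw1, comp_assoc, Hw2. apply (ArrHom_square (tau d)). }
    exists (exist _ (w1, w2) Hsq : @Hom (Arr A) (mkArrOb x) Y). split.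
    + intros d. apply ArrHom_eq; [apply Hw1 | apply Hw2].
    + intros m Hm. apply ArrHom_eq; simpl.
      * apply (colim_hom_ext _ HS). intros d. rewrite Hw1.
        symmetry. exact (f_equal (fun z => fst (proj1_sig z)) (Hm d)).
      * apply (colim_hom_ext _ HT). intros d. rewrite Hw2.
        symmetry. exact (f_equal (fun z => snd (proj1_sig z)) (Hm d)).
Qed.

End ArrColimitOfComponents.

Lemma arr_colim_components {A : Category} (HA : has_finite_colimits A)
  {D : Category} (HD : fin_cat D) (G : Functor D (Arr A)) (X : Arr A)
  (i : forall d : D, Hom (G d) X) (HX : is_colimit G X i) :
  is_colimit (FComp G (dom_functor A)) (ar_s X) (fun d => fmap (dom_functor A) (i d)) /\
  is_colimit (FComp G (cod_functor A)) (ar_t X) (fun d => fmap (cod_functor A) (i d)).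
Proof.
  destruct (HA D HD (FComp G (dom_functor A))) as [S0 [s HS]].
  destruct (HA D HD (FComp G (cod_functor A))) as [T0 [t HT]].
  destruct (colim_desc_ex _ HS (fun d => ar (G d) · t d)) as [x Hx].
  { intros d d' g. simpl.
    rewrite <- comp_assoc, <- (ArrHom_square (fmap G g)), comp_assoc.
    f_equal. exact (proj1 HT d d' g). }
  pose proof (arr_colim_of_components G S0 s HS T0 t HT x Hx) as HZ.
  destruct (colim_unique_up_to_iso _ HX HZ) as [u [v [Hu [Hv [uv vu]]]]].
  split.
  - exact (colim_image_transport_iso G (dom_functor A) i _ u v Hu Hv uv vu HS).
  - exact (colim_image_transport_iso G (cod_functor A) i _ u v Hu Hv uv vu HT).
Qed.

Inductive SpanOb := spanL | spanM | spanR.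

(* [spanM] is the apex of the span [spanL <- spanM -> spanR]. *)
Definition span_le (a b : SpanOb) : bool :=
  match a, b with
  | spanL, spanL | spanM, spanM | spanR, spanR | spanM, spanL | spanM, spanR => true
  | _, _ => false
  end.

Lemma span_le_refl (a : SpanOb) : span_le a a = true.
Proof. destruct a; reflexivity. Qed.

Lemma span_le_trans (a b c : SpanOb) :
  span_le a b = true -> span_le b c = true -> span_le a c = true.
Proof. destruct a, b, c; simpl; auto. Qed.

Definition SpanCat : Category.
Proof.
  refine {| Ob := SpanOb; Hom := fun a b => span_le a b = true; idm := span_le_refl;
            comp := span_le_trans |}; intros; apply proof_irrelevance.
Defined.

Lemma SpanCat_hom_eq {a b : SpanCat} (g g' : Hom a b) : g = g'.
Proof. exact (proof_irrelevance (span_le a b = true) g g'). Qed.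

Lemma SpanCat_fin : fin_cat SpanCat.
Proof.
  split.
  - exists (spanL :: spanM :: spanR :: nil). intros x; destruct x; simpl; auto.
  - intros x y. simpl. destruct (span_le x y).
    + exists (eq_refl :: nil). intros f. left. apply proof_irrelevance.
    + exists nil. intros f. discriminate f.
Qed.

Definition span_legL : @Hom SpanCat spanM spanL := eq_refl.
Definition span_legR : @Hom SpanCat spanM spanR := eq_refl.

Section SpanFunctor.
Context {C : Category} (L M R : C) (f : Hom M L) (k : Hom M R).

Definition span_ob (a : SpanOb) : C :=
  match a with spanL => L | spanM => M | spanR => R end.

Definition span_map (a b : SpanOb) : span_le a b = true -> Hom (span_ob a) (span_ob b) :=
  match a, b return span_le a b = true -> Hom (span_ob a) (span_ob b) with
  | spanL, spanL => fun _ => idm L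
  | spanM, spanM => fun _ => idm M
  | spanR, spanR => fun _ => idm R
  | spanM, spanL => fun _ => f
  | spanM, spanR => fun _ => k
  | spanL, spanM | spanL, spanR | spanR, spanL | spanR, spanM =>
      fun e => match diff_false_true e with end
  end.

Definition span_functor : Functor SpanCat C.
Proof.
  refine {| fobj := (span_ob : SpanCat -> C); fmap := span_map |}.
  - intros X; destruct X; reflexivity.
  - intros X Y Z g h; destruct X, Y, Z; simpl in *; try discriminate;
      rewrite ?comp_id_l, ?comp_id_r; reflexivity.
Defined.

End SpanFunctor.

Section Pushouts.
Context {C : Category} (G : Functor SpanCat C) (P : C)
  (inj : forall d : SpanCat, Hom (G d) P).

Lemma pushout_apex_inj (Hc : is_cocone G P inj) :
  inj spanM = fmap G span_legL · inj spanL /\ inj spanM = fmap G span_legR · inj spanR.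
Proof. split; symmetry; apply Hc. Qed.

Lemma pushout_hom_ext (H : is_colimit G P inj) {Y : C} (u v : Hom P Y) :
  inj spanL · u = inj spanL · v -> inj spanR · u = inj spanR · v -> u = v.
Proof.
  intros E1 E2. apply (colim_hom_ext _ H). intros d; destruct d; auto.
  rewrite (proj1 (pushout_apex_inj (proj1 H))), !comp_assoc, E1. reflexivity.
Qed.

Lemma pushout_desc_ex (H : is_colimit G P inj) {Y : C}
  (a : Hom (G spanL) Y) (b : Hom (G spanR) Y) :
  fmap G span_legL · a = fmap G span_legR · b ->
  exists u : Hom P Y, inj spanL · u = a /\ inj spanR · u = b.
Proof.
  intros E.
  set (t := fun d : SpanCat => match d return Hom (G d) Y with
              | spanL => a | spanM => fmap G span_legL · a | spanR => b end).
  destruct (colim_desc_ex _ H t) as [u Hu].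
  - intros d d' g; destruct d, d'; try discriminate g; simpl.
    + rewrite (SpanCat_hom_eq g (@idm SpanCat spanL)), fmap_id, comp_id_l. reflexivity.
    + rewrite (SpanCat_hom_eq g span_legL). reflexivity.
    + rewrite (SpanCat_hom_eq g (@idm SpanCat spanM)), fmap_id, comp_id_l. reflexivity.
    + rewrite (SpanCat_hom_eq g span_legR). symmetry; exact E.
    + rewrite (SpanCat_hom_eq g (@idm SpanCat spanR)), fmap_id, comp_id_l. reflexivity.
  - exists u. split; [exact (Hu spanL) | exact (Hu spanR)].
Qed.

Context (T : NHStruct C) (Hc : is_cocone G P inj) (H : is_Th_strong_colimit T G P inj).

Lemma strong_pushout_nh_ext {Y : C} (s1 s2 : NH T P Y) : projT1 s1 = projT1 s2 ->
  lw (inj spanL) s1 = lw (inj spanL) s2 -> lw (inj spanR) s1 = lw (inj spanR) s2 ->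
  s1 = s2.
Proof.
  intros e E1 E2. apply (strong_colim_nh_ext T G P inj Hc H _ _ e).
  intros d; destruct d; auto.
  rewrite (proj1 (pushout_apex_inj Hc)), <- !lw_comp, E1. reflexivity.
Qed.

Lemma strong_pushout_nh_ex {Y : C} (t : Hom P Y) (sl : NH T (G spanL) Y)
  (sr : NH T (G spanR) Y) :
  projT1 sl = inj spanL · t -> projT1 sr = inj spanR · t ->
  lw (fmap G span_legL) sl = lw (fmap G span_legR) sr ->
  exists phi : T P Y t, lw (inj spanL) (pack phi) = sl /\ lw (inj spanR) (pack phi) = sr.
Proof.
  intros e1 e2 E.
  set (tn := fun d : SpanCat => match d return NH T (G d) Y with
               | spanL => sl | spanM => lw (fmap G span_legL) sl | spanR => sr end).
  destruct (strong_colim_nh_ex T G P inj Hc H t tn) as [phi Hphi].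
  - intros d; destruct d; simpl; auto.
    rewrite comp_id_r, e1, <- comp_assoc, (Hc spanM spanL span_legL). reflexivity.
  - intros d d' g; destruct d, d'; try discriminate g; simpl.
    + rewrite (SpanCat_hom_eq g (@idm SpanCat spanL)), fmap_id, lw_id. reflexivity.
    + rewrite (SpanCat_hom_eq g span_legL). reflexivity.
    + rewrite (SpanCat_hom_eq g (@idm SpanCat spanM)), fmap_id, lw_id. reflexivity.
    + rewrite (SpanCat_hom_eq g span_legR). symmetry; exact E.
    + rewrite (SpanCat_hom_eq g (@idm SpanCat spanR)), fmap_id, lw_id. reflexivity.
  - exists phi. split; [exact (Hphi spanL) | exact (Hphi spanR)].
Qed.

End Pushouts.

Lemma pack_ThD_eq {A : Category} {X Y : Arr A} {u v : Hom X Y}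
  (phi : ThD X Y u) (psi : ThD X Y v) :
  u = v -> proj1_sig phi = proj1_sig psi ->
  @pack _ (ThDelta A) _ _ _ phi = @pack _ (ThDelta A) _ _ _ psi.
Proof. apply ThD_heq. Qed.

Lemma pack_ThD_val {A : Category} {X Y : Arr A} {u v : Hom X Y}
  (phi : ThD X Y u) (psi : ThD X Y v) :
  @pack _ (ThDelta A) _ _ _ phi = @pack _ (ThDelta A) _ _ _ psi ->
  proj1_sig phi = proj1_sig psi.
Proof. intros E. exact (f_equal (fun s : NH (ThDelta A) X Y => proj1_sig (projT2 s)) E). Qed.

(* For [g = (g1, g0) : (B, b, B0) -> (C, c, C0)], form the pushout [P] of
   [B0 <-b- B -g1-> C] and let [k : P -> C0] be induced by [g0] and [c]; then
   [(inj_R, id) : (C, c, C0) -> (P, k, C0)] with nullhomotopy [inj_L] is a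
   Theta_Delta-cokernel of [g]. *)
Section PushoutCokernel.
Context {A : Category} {X Y : Arr A} (g : Hom X Y) (P : A)
  (inj : forall d : SpanCat,
      Hom (span_functor (ar_t X) (ar_s X) (ar_s Y) (ar X) (fst (proj1_sig g)) d) P)
  (HP : is_colimit (span_functor (ar_t X) (ar_s X) (ar_s Y) (ar X) (fst (proj1_sig g))) P inj)
  (k : Hom P (ar_t Y)) (Hk1 : inj spanL · k = snd (proj1_sig g)) (Hk2 : inj spanR · k = ar Y).

Definition pushout_coker_ob : Arr A := mkArrOb k.

Lemma pushout_coker_map_square :
  ar Y · snd (inj spanR, idm (ar_t Y)) = fst (inj spanR, idm (ar_t Y)) · ar pushout_coker_ob.
Proof. simpl. rewrite comp_id_r. symmetry. exact Hk2. Qed.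

Definition pushout_coker_map : Hom Y pushout_coker_ob :=
  exist _ (inj spanR, idm (ar_t Y)) pushout_coker_map_square.

Lemma pushout_coker_nh_dom : ar X · inj spanL = fst (proj1_sig (g · pushout_coker_map)).
Proof.
  destruct (pushout_apex_inj _ _ _ (proj1 HP)) as [E1 E2].
  exact (eq_trans (eq_sym E1) E2).
Qed.

Lemma pushout_coker_nh_cod :
  inj spanL · ar pushout_coker_ob = snd (proj1_sig (g · pushout_coker_map)).
Proof. simpl. etransitivity; [exact Hk1|]. symmetry. apply comp_id_r. Qed.

Definition pushout_coker_nh : ThD X pushout_coker_ob (g · pushout_coker_map) :=
  exist _ (inj spanL) (conj pushout_coker_nh_dom pushout_coker_nh_cod).

Lemma pushout_coker_is_coker :
  is_Th_cokernel (ThDelta A) g pushout_coker_ob pushout_coker_map pushout_coker_nh.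
Proof.
  intros D h psi.
  destruct psi as [q [Hq1 Hq2]].
  destruct h as [[h1 h2] Hh]. simpl in Hq1, Hq2, Hh.
  destruct (pushout_desc_ex _ _ _ HP q h1 Hq1) as [u [Hu1 Hu2]].
  assert (Hsq : ar pushout_coker_ob · snd (u, h2) = fst (u, h2) · ar D).
  { simpl. apply (pushout_hom_ext _ _ _ HP).
    - rewrite <- !comp_assoc, Hk1, Hu1. symmetry. exact Hq2.
    - rewrite <- !comp_assoc, Hk2, Hu2. exact Hh. }
  assert (Ec : pushout_coker_map · (exist _ (u, h2) Hsq : Hom pushout_coker_ob D)
               = exist _ (h1, h2) Hh).
  { apply ArrHom_eq; simpl; [exact Hu2 | apply comp_id_l]. }
  exists (exist _ (u, h2) Hsq). split; [split|].
  - exact Ec.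
  - rewrite heq_pack. apply pack_ThD_eq.
    + rewrite comp_id_l, comp_assoc. f_equal. exact Ec.
    + simpl. rewrite comp_id_l. exact Hu1.
  - intros h'' [Eh1 Eh2]. rewrite heq_pack in Eh2. apply pack_ThD_val in Eh2.
    simpl in Eh2. rewrite comp_id_l in Eh2.
    apply ArrHom_eq; simpl.
    + apply (pushout_hom_ext _ _ _ HP).
      * rewrite Hu1. symmetry. exact Eh2.
      * rewrite Hu2. symmetry. exact (f_equal (fun z => fst (proj1_sig z)) Eh1).
    + pose proof (f_equal (fun z => snd (proj1_sig z)) Eh1) as E. simpl in E.
      rewrite comp_id_l in E. symmetry. exact E.
Qed.

End PushoutCokernel.

(* Every object [a = (B, a, B0)] of [Arr A] is the Theta_Delta-cokernel of
   [Gamma a : Gamma B -> Gamma B0], via [(!, id) : Gamma B0 -> a] and the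
   nullhomotopy [id_B]. *)
Section GammaCokernel.
Context {A : Category} (I : A) (iI : forall X : A, Hom I X)
  (HI : forall (X : A) (f : Hom I X), f = iI X).
Let Gm := GammaF A I iI HI.

Lemma initial_hom_eq {Z : A} (u v : Hom I Z) : u = v.
Proof. rewrite (HI _ u), (HI _ v). reflexivity. Qed.

Lemma Gamma_coker_map_square (X : Arr A) :
  ar (Gm (ar_t X)) · snd (iI (ar_s X), idm (ar_t X))
  = fst (iI (ar_s X), idm (ar_t X)) · ar X.
Proof. apply initial_hom_eq. Qed.

Definition Gamma_coker_map (X : Arr A) : Hom (Gm (ar_t X)) X :=
  exist _ (iI (ar_s X), idm (ar_t X)) (Gamma_coker_map_square X).

Lemma Gamma_coker_nh_dom (X : Arr A) :
  ar (Gm (ar_s X)) · idm (ar_s X) = fst (proj1_sig (fmap Gm (ar X) · Gamma_coker_map X)).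
Proof. apply initial_hom_eq. Qed.

Lemma Gamma_coker_nh_cod (X : Arr A) :
  idm (ar_s X) · ar X = snd (proj1_sig (fmap Gm (ar X) · Gamma_coker_map X)).
Proof. simpl. rewrite comp_id_l, comp_id_r. reflexivity. Qed.

Definition Gamma_coker_nh (X : Arr A) :
  ThD (Gm (ar_s X)) X (fmap Gm (ar X) · Gamma_coker_map X) :=
  exist _ (idm (ar_s X)) (conj (Gamma_coker_nh_dom X) (Gamma_coker_nh_cod X)).

Lemma Gamma_coker_is_coker (X : Arr A) :
  is_Th_cokernel (ThDelta A) (fmap Gm (ar X)) X (Gamma_coker_map X) (Gamma_coker_nh X).
Proof.
  intros D h psi.
  destruct psi as [q [Hq1 Hq2]].
  destruct h as [[h1 h2] Hh]. simpl in Hq1, Hq2, Hh.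
  assert (Hsq : ar X · snd (q, h2) = fst (q, h2) · ar D).
  { simpl. rewrite Hq2. reflexivity. }
  assert (Ec : Gamma_coker_map X · (exist _ (q, h2) Hsq : Hom X D) = exist _ (h1, h2) Hh).
  { apply ArrHom_eq; simpl; [apply initial_hom_eq | apply comp_id_l]. }
  exists (exist _ (q, h2) Hsq). split; [split|].
  - exact Ec.
  - rewrite heq_pack. apply pack_ThD_eq.
    + rewrite comp_id_l, comp_assoc. f_equal. exact Ec.
    + simpl. rewrite !comp_id_l. reflexivity.
  - intros h'' [Eh1 Eh2]. rewrite heq_pack in Eh2. apply pack_ThD_val in Eh2.
    simpl in Eh2. rewrite !comp_id_l in Eh2.
    apply ArrHom_eq; simpl.
    + symmetry. exact Eh2.
    + pose proof (f_equal (fun z => snd (proj1_sig z)) Eh1) as E. simpl in E.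
      rewrite comp_id_l in E. symmetry. exact E.
Qed.

End GammaCokernel.

Lemma NatTrans_inv_natural {C D : Category} {F G : Functor C D} (a : NatTrans F G)
  (b : forall X, Hom (G X) (F X)) (ab : forall X, a X · b X = idm _)
  (ba : forall X, b X · a X = idm _) {X Y : C} (f : Hom X Y) :
  fmap G f · b Y = b X · fmap F f.
Proof.
  transitivity (b X · a X · fmap G f · b Y).
  { rewrite ba, comp_id_l. reflexivity. }
  rewrite (comp_assoc (b X)), <- (ntc_nat a), !comp_assoc, ab, comp_id_r. reflexivity.
Qed.

Lemma is_2mor_inv {C D : Category} {TC : NHStruct C} {TD : NHStruct D} {M1 M2 : NHMor TC TD}
  (a : NatTrans M1 M2) (b : NatTrans M2 M1) (ab : forall X, a X · b X = idm _)
  (ba : forall X, b X · a X = idm _) : is_2mor a -> is_2mor b.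
Proof.
  intros Ha X Y g phi. specialize (Ha X Y g phi). rewrite heq_pack in Ha |- *.
  change (lw (a X) (nhmap M2 (pack phi)) = rw (nhmap M1 (pack phi)) (a Y)) in Ha.
  change (lw (b X) (nhmap M1 (pack phi)) = rw (nhmap M2 (pack phi)) (b Y)).
  rewrite <- (rw_id _ (nhmap M1 (pack phi))), <- (ab Y), <- rw_comp, lw_rw, <- Ha, lw_comp,
    ba, lw_id.
  reflexivity.
Qed.

Definition EmptyCat : Category.
Proof.
  refine {| Ob := Empty_set; Hom := fun x _ => match x with end;
            idm := fun x => match x with end;
            comp := fun x _ _ _ _ => match x with end |}; intros [].
Defined.

Lemma EmptyCat_fin : fin_cat EmptyCat.
Proof. split; [exists nil; intros []| intros []]. Qed.

Definition empty_functor (C : Category) : Functor EmptyCat C.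
Proof.
  refine {| fobj := fun x : EmptyCat => match x with end;
            fmap := fun x _ _ => match x with end |}; intros [].
Defined.

Lemma initial_is_colim {A : Category} (I : A) (iI : forall X : A, Hom I X)
  (HI : forall (X : A) (f : Hom I X), f = iI X) :
  is_colimit (empty_functor A) I (fun d => match d with end).
Proof.
  split; [intros []|]. intros Y t _. exists (iI Y). split; [intros []|].
  intros u _. symmetry. apply HI.
Qed.

Section Extension.
Context {A B : Category} (T : NHStruct B) (HRI : reduced_interchange T).
Context (coker_ob : forall (X Y : B), Hom X Y -> B)
  (coker_map : forall (X Y : B) (g : Hom X Y), Hom Y (coker_ob X Y g))
  (coker_nh : forall (X Y : B) (g : Hom X Y), T X (coker_ob X Y g) (g · coker_map X Y g))
  (coker_strong : forall (X Y : B) (g : Hom X Y),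
      is_strong_Th_cokernel T g (coker_ob X Y g) (coker_map X Y g) (coker_nh X Y g)).
Context (HBs : all_fin_colimits_Th_strong T) (HA : has_finite_colimits A).

Section ExtensionOfFunctor.
Context (F : Functor A B).

Definition ext_ob (X : Arr A) : B := coker_ob _ _ (fmap F (ar X)).
Definition ext_coker (X : Arr A) : Hom (F (ar_t X)) (ext_ob X) := coker_map _ _ (fmap F (ar X)).
Definition ext_nh (X : Arr A) : NH T (F (ar_s X)) (ext_ob X) := pack (coker_nh _ _ (fmap F (ar X))).

Lemma ext_is_strong (X : Arr A) :
  is_strong_Th_cokernel T (fmap F (ar X)) (ext_ob X) (ext_coker X) (coker_nh _ _ (fmap F (ar X))).
Proof. apply coker_strong. Qed.

Lemma ext_is_coker (X : Arr A) :
  is_Th_cokernel T (fmap F (ar X)) (ext_ob X) (ext_coker X) (coker_nh _ _ (fmap F (ar X))).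
Proof. apply ext_is_strong. Qed.

Lemma ext_hom_ext (X : Arr A) {Y : B} (u v : Hom (ext_ob X) Y) :
  ext_coker X · u = ext_coker X · v -> rw (ext_nh X) u = rw (ext_nh X) v -> u = v.
Proof. apply (coker_hom_ext T (ext_is_coker X)). Qed.

Lemma ext_nh_ext (X : Arr A) {Y : B} (s1 s2 : NH T (ext_ob X) Y) :
  projT1 s1 = projT1 s2 -> lw (ext_coker X) s1 = lw (ext_coker X) s2 -> s1 = s2.
Proof. apply (strong_coker_nh_ext T HRI (ext_is_strong X)). Qed.

Lemma ext_nh_arrow (X : Arr A) : projT1 (ext_nh X) = fmap F (ar X) · ext_coker X.
Proof. reflexivity. Qed.

Lemma ext_map_nh_arrow {X Y : Arr A} (u : Hom X Y) :
  projT1 (lw (fmap F (fst (proj1_sig u))) (ext_nh Y)) =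
  fmap F (ar X) · (fmap F (snd (proj1_sig u)) · ext_coker Y).
Proof.
  simpl. rewrite comp_id_r, <- !comp_assoc, <- !fmap_comp.
  f_equal. f_equal. symmetry. apply ArrHom_square.
Qed.

Definition ext_map {X Y : Arr A} (u : Hom X Y) : Hom (ext_ob X) (ext_ob Y) :=
  coker_desc T (ext_is_coker X) (fmap F (snd (proj1_sig u)) · ext_coker Y)
    (lw (fmap F (fst (proj1_sig u))) (ext_nh Y)) (ext_map_nh_arrow u).

Lemma ext_map_coker {X Y : Arr A} (u : Hom X Y) :
  ext_coker X · ext_map u = fmap F (snd (proj1_sig u)) · ext_coker Y.
Proof. apply (coker_desc_spec T (ext_is_coker X)). Qed.

Lemma ext_map_nh {X Y : Arr A} (u : Hom X Y) :
  rw (ext_nh X) (ext_map u) = lw (fmap F (fst (proj1_sig u))) (ext_nh Y).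
Proof. apply (coker_desc_spec T (ext_is_coker X)). Qed.

Lemma ext_map_unique {X Y : Arr A} (u : Hom X Y) (m : Hom (ext_ob X) (ext_ob Y)) :
  ext_coker X · m = fmap F (snd (proj1_sig u)) · ext_coker Y ->
  rw (ext_nh X) m = lw (fmap F (fst (proj1_sig u))) (ext_nh Y) -> m = ext_map u.
Proof.
  intros E1 E2. apply ext_hom_ext.
  - etransitivity; [exact E1|]. symmetry; apply ext_map_coker.
  - etransitivity; [exact E2|]. symmetry; apply ext_map_nh.
Qed.

Lemma ext_map_id (X : Arr A) : ext_map (idm X) = idm (ext_ob X).
Proof.
  symmetry. apply ext_map_unique; simpl.
  - rewrite fmap_id, comp_id_l, comp_id_r. reflexivity.
  - rewrite fmap_id, lw_id, rw_id. reflexivity.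
Qed.

Lemma ext_map_comp {X Y Z : Arr A} (u : Hom X Y) (v : Hom Y Z) :
  ext_map (u · v) = ext_map u · ext_map v.
Proof.
  symmetry. apply ext_map_unique; simpl.
  - rewrite <- comp_assoc, ext_map_coker, comp_assoc, ext_map_coker, <- comp_assoc,
      fmap_comp.
    reflexivity.
  - rewrite <- rw_comp, ext_map_nh, <- lw_rw, ext_map_nh, lw_comp, fmap_comp. reflexivity.
Qed.

Definition ext_functor : Functor (Arr A) B.
Proof.
  refine {| fobj := ext_ob; fmap := @ext_map |}.
  - apply ext_map_id.
  - intros; apply ext_map_comp.
Defined.

Lemma ext_nh_map_arrow {X Y : Arr A} (u : Hom X Y) (psi : ThD X Y u) :
  projT1 (lw (fmap F (proj1_sig psi)) (ext_nh Y)) = ext_coker X · ext_map u.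
Proof.
  simpl. rewrite comp_id_r, ext_map_coker, <- comp_assoc, <- fmap_comp.
  destruct psi as [p [Hp1 Hp2]]. simpl. rewrite Hp2. reflexivity.
Qed.

Lemma ext_nh_map_compat {X Y : Arr A} (u : Hom X Y) (psi : ThD X Y u) :
  lw (fmap F (ar X)) (lw (fmap F (proj1_sig psi)) (ext_nh Y)) = rw (ext_nh X) (ext_map u).
Proof.
  rewrite lw_comp, <- fmap_comp, ext_map_nh.
  destruct psi as [p [Hp1 Hp2]]. simpl. rewrite Hp1. reflexivity.
Qed.

Definition ext_nh_map {X Y : Arr A} (u : Hom X Y) (psi : ThD X Y u)
  : T (ext_ob X) (ext_ob Y) (ext_map u) :=
  strong_coker_nh_desc T (ext_is_strong X) (ext_map u)
    (lw (fmap F (proj1_sig psi)) (ext_nh Y)) (ext_nh_map_arrow u psi) (ext_nh_map_compat u psi).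

Lemma ext_nh_map_spec {X Y : Arr A} (u : Hom X Y) (psi : ThD X Y u) :
  lw (ext_coker X) (pack (ext_nh_map u psi)) = lw (fmap F (proj1_sig psi)) (ext_nh Y).
Proof. apply strong_coker_nh_desc_spec. Qed.

Lemma ext_nh_map_whisk (X Y Z W0 : Arr A) (f : Hom X Y) (g : Hom Y Z) (h : Hom Z W0)
  (phi : ThDelta A Y Z g) :
  heq T (ext_nh_map (f · g · h) (whisk (ThDelta A) f g h phi))
        (whisk T (ext_map f) (ext_map g) (ext_map h) (ext_nh_map g phi)).
Proof.
  rewrite heq_pack.
  change (pack (whisk T (ext_map f) (ext_map g) (ext_map h) (ext_nh_map g phi)))
    with (wh (ext_map f) (pack (ext_nh_map g phi)) (ext_map h)).
  apply ext_nh_ext.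
  - change (ext_map (f · g · h) = ext_map f · ext_map g · ext_map h).
    rewrite !ext_map_comp. reflexivity.
  - change (lw (ext_coker X) (pack (ext_nh_map (f · g · h) (whisk (ThDelta A) f g h phi))) =
            lw (ext_coker X) (wh (ext_map f) (pack (ext_nh_map g phi)) (ext_map h))).
    rewrite ext_nh_map_spec, wh_lw_rw, lw_comp, ext_map_coker, <- lw_comp, lw_rw,
      ext_nh_map_spec, <- lw_rw, ext_map_nh, !lw_comp.
    f_equal. simpl. rewrite !fmap_comp, !comp_assoc. reflexivity.
Qed.

Definition ext_nhmor : NHMor (ThDelta A) T :=
  Build_NHMor (Arr A) B (ThDelta A) T ext_functor (fun X Y g psi => ext_nh_map g psi)
    ext_nh_map_whisk.


Context (HF : preserves_fin_colimits F).

Section ExtensionPreservesColimit.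
Context {D : Category} (HD : fin_cat D) (G : Functor D (Arr A)) (X : Arr A)
  (i : forall d : D, Hom (G d) X) (HX : is_colimit G X i).

Let HFs := HF D HD _ _ _ (proj1 (arr_colim_components HA HD G X i HX)).
Let HFt := HF D HD _ _ _ (proj2 (arr_colim_components HA HD G X i HX)).
Let HFs_strong := HBs D HD _ _ _ HFs.

Lemma ext_colim_hom_ext {Y : B} (u v : Hom (ext_ob X) Y) :
  (forall d, ext_map (i d) · u = ext_map (i d) · v) -> u = v.
Proof.
  intros E.
  assert (Ec : ext_coker X · u = ext_coker X · v).
  { apply (colim_hom_ext _ HFt). intros d. cbn [fobj fmap FComp cod_functor].
    rewrite <- !comp_assoc, <- !ext_map_coker, !comp_assoc, E. reflexivity. }
  apply (ext_hom_ext X); [exact Ec|].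
  apply (strong_colim_nh_ext T _ _ _ (proj1 HFs) HFs_strong).
  - rewrite !rw_arrow, ext_nh_arrow, !comp_assoc, Ec. reflexivity.
  - intros d.
    change (lw (fmap F (fst (proj1_sig (i d)))) (rw (ext_nh X) u)
            = lw (fmap F (fst (proj1_sig (i d)))) (rw (ext_nh X) v)).
    rewrite !lw_rw, <- !ext_map_nh, !rw_comp, E. reflexivity.
Qed.

Context {Y : B} (t : forall d : D, Hom (ext_ob (G d)) Y)
  (Ht : forall d d' (g : Hom d d'), ext_map (fmap G g) · t d' = t d).

Lemma ext_colim_desc_cod :
  exists u0 : Hom (F (ar_t X)) Y,
    forall d, fmap F (snd (proj1_sig (i d))) · u0 = ext_coker (G d) · t d.
Proof.
  apply (colim_desc_ex _ HFt (fun d => ext_coker (G d) · t d)).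
  intros d d' g. cbn [fobj fmap FComp cod_functor].
  rewrite <- comp_assoc, <- ext_map_coker, comp_assoc, Ht. reflexivity.
Qed.

Lemma ext_colim_desc_nh (u0 : Hom (F (ar_t X)) Y)
  (Hu0 : forall d, fmap F (snd (proj1_sig (i d))) · u0 = ext_coker (G d) · t d) :
  exists phi : T _ Y (fmap F (ar X) · u0),
    forall d, lw (fmap F (fst (proj1_sig (i d)))) (pack phi) = rw (ext_nh (G d)) (t d).
Proof.
  apply (strong_colim_nh_ex T _ _ _ (proj1 HFs) HFs_strong).
  - intros d. cbn [fobj fmap FComp dom_functor].
    rewrite rw_arrow, ext_nh_arrow, comp_id_l, comp_assoc, <- Hu0, <- !comp_assoc,
      <- !fmap_comp, (ArrHom_square (i d)).
    reflexivity.
  - intros d d' g. cbn [fobj fmap FComp dom_functor].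
    rewrite lw_rw, <- ext_map_nh, rw_comp, Ht. reflexivity.
Qed.

Lemma ext_colim_desc_ex :
  exists u : Hom (ext_ob X) Y, forall d, ext_map (i d) · u = t d.
Proof.
  destruct ext_colim_desc_cod as [u0 Hu0].
  destruct (ext_colim_desc_nh u0 Hu0) as [phi Hphi].
  destruct (coker_desc_ex T (ext_is_coker X) u0 (pack phi) eq_refl) as [u [Hu1 Hu2]].
  change (rw (ext_nh X) u = pack phi) in Hu2.
  exists u. intros d. apply ext_hom_ext.
  - rewrite <- comp_assoc, ext_map_coker, comp_assoc. cbn [fst snd proj1_sig].
    rewrite Hu1. apply Hu0.
  - rewrite <- rw_comp, ext_map_nh, <- lw_rw, Hu2. apply Hphi.
Qed.

End ExtensionPreservesColimit.

Lemma ext_preserves_colimits : preserves_fin_colimits ext_functor.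
Proof.
  intros D HD G X i HX. split.
  - intros d d' g. cbn [fobj fmap FComp ext_functor].
    rewrite <- ext_map_comp. f_equal. apply (proj1 HX).
  - intros Y t Ht.
    destruct (ext_colim_desc_ex HD G X i HX t Ht) as [u Hu].
    exists u. split; [exact Hu|].
    intros v Hv. apply (ext_colim_hom_ext HD G X i HX). intros d.
    exact (eq_trans (Hu d) (eq_sym (Hv d))).
Qed.

Section ExtensionPreservesPushoutCokernel.
Context {X Y : Arr A} (g : Hom X Y) (P : A)
  (inj : forall d : SpanCat,
      Hom (span_functor (ar_t X) (ar_s X) (ar_s Y) (ar X) (fst (proj1_sig g)) d) P)
  (HP : is_colimit (span_functor (ar_t X) (ar_s X) (ar_s Y) (ar X) (fst (proj1_sig g))) P inj)
  (k : Hom P (ar_t Y)) (Hk1 : inj spanL · k = snd (proj1_sig g)) (Hk2 : inj spanR · k = ar Y).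

Let K : Arr A := pushout_coker_ob P k.
Let c : Hom Y K := pushout_coker_map g P inj k Hk2.
Let gam : ThD X K (g · c) := pushout_coker_nh g P inj HP k Hk1 Hk2.
Let gam_hat : NH T (ext_ob X) (ext_ob K) := pack (ext_nh_map (g · c) gam).
Let HFP := HF _ SpanCat_fin _ _ _ HP.
Let HFP_strong := HBs _ SpanCat_fin _ _ _ HFP.

Lemma ext_pushout_coker_map_coker : ext_coker Y · ext_map c = ext_coker K.
Proof.
  etransitivity; [|apply comp_id_l]. rewrite ext_map_coker. f_equal. exact (fmap_id F _).
Qed.

Lemma ext_pushout_coker_hom_ext {E : B} (h1 h2 : Hom (ext_ob K) E) :
  ext_map c · h1 = ext_map c · h2 -> rw gam_hat h1 = rw gam_hat h2 -> h1 = h2.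
Proof.
  intros E1 E2.
  assert (Ec : ext_coker K · h1 = ext_coker K · h2).
  { rewrite <- ext_pushout_coker_map_coker, !comp_assoc, E1. reflexivity. }
  apply (ext_hom_ext K); [exact Ec|].
  apply (strong_pushout_nh_ext _ _ _ T (proj1 HFP) HFP_strong).
  - rewrite !rw_arrow, ext_nh_arrow, !comp_assoc, Ec. reflexivity.
  - change (lw (fmap F (proj1_sig gam)) (rw (ext_nh K) h1)
            = lw (fmap F (proj1_sig gam)) (rw (ext_nh K) h2)).
    rewrite !lw_rw, <- ext_nh_map_spec, <- !lw_rw. unfold gam_hat in E2. rewrite E2.
    reflexivity.
  - change (lw (fmap F (fst (proj1_sig c))) (rw (ext_nh K) h1)
            = lw (fmap F (fst (proj1_sig c))) (rw (ext_nh K) h2)).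
    rewrite !lw_rw, <- ext_map_nh, !rw_comp, E1. reflexivity.
Qed.

Lemma ext_pushout_coker_desc_ex {E : B} (h : Hom (ext_ob Y) E) (s : NH T (ext_ob X) E) :
  projT1 s = ext_map g · h ->
  exists h' : Hom (ext_ob K) E, ext_map c · h' = h /\ rw gam_hat h' = s.
Proof.
  intros e.
  assert (Hk1' : fmap F (inj spanL) · fmap F k = fmap F (snd (proj1_sig g))).
  { rewrite <- fmap_comp. f_equal. exact Hk1. }
  assert (Hk2' : fmap F (inj spanR) · fmap F k = fmap F (ar Y)).
  { rewrite <- fmap_comp. f_equal. exact Hk2. }
  destruct (strong_pushout_nh_ex _ _ _ T (proj1 HFP) HFP_strong (fmap F k · (ext_coker Y · h))
              (lw (ext_coker X) s) (rw (ext_nh Y) h)) as [th [Hth1 Hth2]].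
  - change (ext_coker X · projT1 s · idm E
            = fmap F (inj spanL) · (fmap F k · (ext_coker Y · h))).
    rewrite comp_id_r, e, <- comp_assoc, ext_map_coker, <- (comp_assoc (fmap F (inj spanL))),
      Hk1', comp_assoc. reflexivity.
  - change (idm _ · (fmap F (ar Y) · ext_coker Y) · h
            = fmap F (inj spanR) · (fmap F k · (ext_coker Y · h))).
    rewrite comp_id_l, <- (comp_assoc (fmap F (inj spanR))), Hk2', comp_assoc. reflexivity.
  - change (lw (fmap F (ar X)) (lw (ext_coker X) s)
            = lw (fmap F (fst (proj1_sig g))) (rw (ext_nh Y) h)).
    rewrite lw_comp, <- ext_nh_arrow, <- (rw_lw_interchange T HRI (ext_nh X) s), e,
      <- rw_comp, ext_map_nh, lw_rw. reflexivity.
  - destruct (coker_desc_ex T (ext_is_coker K) (ext_coker Y · h) (pack th) eq_refl)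
      as [h' [Hh1 Hh2]].
    change (rw (ext_nh K) h' = pack th) in Hh2.
    assert (Ec : ext_map c · h' = h).
    { apply (ext_hom_ext Y).
      - rewrite <- comp_assoc, ext_pushout_coker_map_coker. exact Hh1.
      - rewrite <- rw_comp, ext_map_nh.
        change (rw (lw (fmap F (inj spanR)) (ext_nh K)) h' = rw (ext_nh Y) h).
        rewrite <- lw_rw. etransitivity; [|exact Hth2]. f_equal. exact Hh2. }
    exists h'. split; [exact Ec|].
    apply (ext_nh_ext X).
    + change (idm _ · ext_map (g · c) · h' = projT1 s).
      rewrite comp_id_l, ext_map_comp, comp_assoc, Ec, e. reflexivity.
    + unfold gam_hat. rewrite lw_rw, ext_nh_map_spec.
      change (rw (lw (fmap F (inj spanL)) (ext_nh K)) h' = lw (ext_coker X) s).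
      rewrite <- lw_rw. etransitivity; [|exact Hth1]. f_equal. exact Hh2.
Qed.

Lemma ext_pushout_coker (e : ext_map (g · c) = ext_map g · ext_map c) :
  is_Th_cokernel T (ext_map g) (ext_ob K) (ext_map c) (trTh T e (ext_nh_map (g · c) gam)).
Proof.
  intros E h phi.
  destruct (ext_pushout_coker_desc_ex h (pack phi) eq_refl) as [h' [H1 H2]].
  exists h'. split; [split|].
  - exact H1.
  - rewrite heq_pack, pack_rwh, pack_trTh. exact H2.
  - intros h'' [E1 E2]. rewrite heq_pack, pack_rwh, pack_trTh in E2.
    apply ext_pushout_coker_hom_ext.
    + rewrite H1, E1. reflexivity.
    + exact (eq_trans H2 (eq_sym E2)).
Qed.

End ExtensionPreservesPushoutCokernel.

(* A Theta_Delta-cokernel is isomorphic to the one built from a pushout, which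
   the extension sends to a Theta-cokernel since [F] preserves pushouts. *)
Lemma ext_preserves_cokernels : preserves_cokernels ext_nhmor.
Proof.
  intros X Y g K c gam Hcok.
  destruct (HA _ SpanCat_fin (span_functor (ar_t X) (ar_s X) (ar_s Y) (ar X) (fst (proj1_sig g))))
    as [P [inj HP]].
  destruct (pushout_desc_ex _ _ _ HP (snd (proj1_sig g)) (ar Y)) as [k [Hk1 Hk2]].
  { exact (ArrHom_square g). }
  pose proof (pushout_coker_is_coker g P inj HP k Hk1 Hk2) as Hcan.
  destruct (coker_unique_up_to_iso (ThDelta A) Hcok Hcan) as [th [th' [E1 [E2 [I1 I2]]]]].
  apply (coker_transport_iso T (ext_pushout_coker g P inj HP k Hk1 Hk2 (ext_map_comp _ _))
           (ext_map th) (ext_map th')).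
  - rewrite <- ext_map_comp, E1. reflexivity.
  - rewrite !pack_trTh.
    change (rw (nhmap ext_nhmor (@pack _ (ThDelta A) _ _ _ (pushout_coker_nh g P inj HP k Hk1 Hk2)))
               (fmap ext_nhmor th) = nhmap ext_nhmor (pack gam)).
    rewrite <- nhmap_rw, E2. reflexivity.
  - rewrite <- ext_map_comp, I1. apply ext_map_id.
  - rewrite <- ext_map_comp, I2. apply ext_map_id.
Qed.

End ExtensionOfFunctor.

Section ExtensionOfNatTrans.
Context (F G : Functor A B) (al : NatTrans F G).

Lemma ext_nat_arrow (X : Arr A) :
  projT1 (lw (al (ar_s X)) (ext_nh G X)) = fmap F (ar X) · (al (ar_t X) · ext_coker G X).
Proof.
  rewrite lw_arrow, ext_nh_arrow, comp_id_r, <- !comp_assoc, (ntc_nat al (ar X)).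
  reflexivity.
Qed.

Definition ext_nat (X : Arr A) : Hom (ext_ob F X) (ext_ob G X) :=
  coker_desc T (ext_is_coker F X) (al (ar_t X) · ext_coker G X)
    (lw (al (ar_s X)) (ext_nh G X)) (ext_nat_arrow X).

Lemma ext_nat_coker (X : Arr A) : ext_coker F X · ext_nat X = al (ar_t X) · ext_coker G X.
Proof. apply (coker_desc_spec T (ext_is_coker F X)). Qed.

Lemma ext_nat_nh (X : Arr A) : rw (ext_nh F X) (ext_nat X) = lw (al (ar_s X)) (ext_nh G X).
Proof. apply (coker_desc_spec T (ext_is_coker F X)). Qed.

Lemma ext_nat_unique (X : Arr A) (m : Hom (ext_ob F X) (ext_ob G X)) :
  ext_coker F X · m = al (ar_t X) · ext_coker G X ->
  rw (ext_nh F X) m = lw (al (ar_s X)) (ext_nh G X) -> m = ext_nat X.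
Proof.
  intros E1 E2. apply ext_hom_ext.
  - etransitivity; [exact E1|]. symmetry; apply ext_nat_coker.
  - etransitivity; [exact E2|]. symmetry; apply ext_nat_nh.
Qed.

Lemma ext_nat_natural {X Y : Arr A} (u : Hom X Y) :
  ext_map F u · ext_nat Y = ext_nat X · ext_map G u.
Proof.
  apply ext_hom_ext.
  - rewrite <- !comp_assoc, ext_map_coker, ext_nat_coker, comp_assoc, ext_nat_coker,
      comp_assoc, ext_map_coker, <- !comp_assoc, (ntc_nat al).
    reflexivity.
  - rewrite <- !rw_comp, ext_map_nh, ext_nat_nh, <- !lw_rw, ext_nat_nh, ext_map_nh,
      !lw_comp, (ntc_nat al).
    reflexivity.
Qed.

Definition ext_nat_trans : NatTrans (ext_functor F) (ext_functor G) :=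
  Build_NatTrans _ _ (ext_functor F) (ext_functor G) ext_nat (fun X Y u => ext_nat_natural u).

Lemma ext_nat_is_2mor : @is_2mor _ _ _ _ (ext_nhmor F) (ext_nhmor G) ext_nat_trans.
Proof.
  intros X Y g phi. rewrite heq_pack.
  change (lw (ext_nat X) (pack (ext_nh_map G g phi))
          = rw (pack (ext_nh_map F g phi)) (ext_nat Y)).
  apply ext_nh_ext.
  - change (ext_nat X · ext_map G g · idm _ = idm _ · ext_map F g · ext_nat Y).
    rewrite comp_id_l, comp_id_r, ext_nat_natural. reflexivity.
  - rewrite lw_comp, ext_nat_coker, <- lw_comp, ext_nh_map_spec, lw_rw, ext_nh_map_spec,
      <- lw_rw, ext_nat_nh, !lw_comp, (ntc_nat al).
    reflexivity.
Qed.

End ExtensionOfNatTrans.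

Lemma ext_nat_id (F : Functor A B) (X : Arr A) : ext_nat F F (NTId F) X = idm _.
Proof.
  symmetry. apply ext_nat_unique; simpl.
  - rewrite comp_id_l, comp_id_r. reflexivity.
  - rewrite lw_id, rw_id. reflexivity.
Qed.

Lemma ext_nat_comp (F G H : Functor A B) (al : NatTrans F G) (be : NatTrans G H) (X : Arr A) :
  ext_nat F H (NTComp al be) X = ext_nat F G al X · ext_nat G H be X.
Proof.
  symmetry. apply ext_nat_unique; simpl.
  - rewrite <- comp_assoc, ext_nat_coker, comp_assoc, ext_nat_coker, comp_assoc. reflexivity.
  - rewrite <- rw_comp, ext_nat_nh, <- lw_rw, ext_nat_nh, lw_comp. reflexivity.
Qed.

Definition ext_hc_ob (F : ColimOb A B) : HCOb A B T :=
  exist _ (ext_nhmor (proj1_sig F))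
    (conj (ext_preserves_colimits (proj1_sig F) (proj2_sig F))
          (ext_preserves_cokernels (proj1_sig F) (proj2_sig F))).

Definition ext_hc_map (F G : ColimOb A B) (al : NatTrans (proj1_sig F) (proj1_sig G)) :
  TwoMor (ext_hc_ob F) (ext_hc_ob G) :=
  exist _ (ext_nat_trans (proj1_sig F) (proj1_sig G) al)
    (ext_nat_is_2mor (proj1_sig F) (proj1_sig G) al).

Definition ext_hc_functor : Functor (ColimCat A B) (HCCat A B T).
Proof.
  refine (Build_Functor (ColimCat A B) (HCCat A B T) ext_hc_ob ext_hc_map _ _).
  - intros F. apply TwoMor_ext, nt_ext. intros X. apply ext_nat_id.
  - intros F G H al be. apply TwoMor_ext, nt_ext. intros X. apply ext_nat_comp.
Defined.

Context (I : A) (iI : forall X : A, Hom I X) (HI : forall (X : A) (f : Hom I X), f = iI X).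
Let Gm := GammaF A I iI HI.

(* [F] preserves the empty colimit, so [F I] is initial and, colimits being
   Theta-strong, every arrow out of it carries exactly one nullhomotopy. *)
Section ImageOfInitial.
Context (F : Functor A B) (HF : preserves_fin_colimits F).
Let HFI := HF _ EmptyCat_fin _ _ _ (initial_is_colim I iI HI).

Lemma image_initial_hom_eq {Y : B} (u v : Hom (F I) Y) : u = v.
Proof. apply (colim_hom_ext _ HFI). intros []. Qed.

Lemma image_initial_nh_eq {Y : B} (s1 s2 : NH T (F I) Y) : s1 = s2.
Proof.
  apply (strong_colim_nh_ext T _ _ _ (proj1 HFI) (HBs _ EmptyCat_fin _ _ _ HFI)).
  - apply image_initial_hom_eq.
  - intros [].
Qed.

Lemma image_initial_nh_ex {Y : B} (t : Hom (F I) Y) : inhabited (T (F I) Y t).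
Proof.
  destruct (strong_colim_nh_ex T _ _ _ (proj1 HFI) (HBs _ EmptyCat_fin _ _ _ HFI) t
              (fun d => match d with end)) as [phi _]; [intros [] | intros [] |].
  exact (inhabits phi).
Qed.

(* [F X] is a cokernel of [F (I -> X)], with comparison map [ext_coker]. *)
Lemma ext_Gamma_counit_ex (X : A) :
  exists e : Hom (ext_ob F (Gm X)) (F X), ext_coker F (Gm X) · e = idm (F X).
Proof.
  destruct (image_initial_nh_ex (fmap F (iI X) · idm (F X))) as [phi].
  destruct (coker_desc_ex T (ext_is_coker F (Gm X)) (idm (F X)) (pack phi) eq_refl)
    as [e [He _]].
  exists e. exact He.
Qed.

Definition ext_Gamma_counit (X : A) : Hom (ext_ob F (Gm X)) (F X) :=
  proj1_sig (constructive_indefinite_description _ (ext_Gamma_counit_ex X)).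

Lemma ext_Gamma_counit_coker (X : A) : ext_coker F (Gm X) · ext_Gamma_counit X = idm (F X).
Proof. exact (proj2_sig (constructive_indefinite_description _ (ext_Gamma_counit_ex X))). Qed.

Lemma ext_Gamma_counit_coker_inv (X : A) :
  ext_Gamma_counit X · ext_coker F (Gm X) = idm _.
Proof.
  apply ext_hom_ext.
  - rewrite <- comp_assoc, ext_Gamma_counit_coker, comp_id_l, comp_id_r. reflexivity.
  - apply image_initial_nh_eq.
Qed.

Lemma ext_Gamma_counit_natural {X Y : A} (f : Hom X Y) :
  ext_map F (fmap Gm f) · ext_Gamma_counit Y = ext_Gamma_counit X · fmap F f.
Proof.
  apply ext_hom_ext.
  - rewrite <- !comp_assoc, ext_map_coker, ext_Gamma_counit_coker, comp_assoc,
      ext_Gamma_counit_coker, comp_id_l, comp_id_r.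
    reflexivity.
  - apply image_initial_nh_eq.
Qed.

Definition ext_Gamma_counit_trans : NatTrans (FComp Gm (ext_functor F)) F :=
  Build_NatTrans _ _ (FComp Gm (ext_functor F)) F ext_Gamma_counit
    (fun X Y f => ext_Gamma_counit_natural f).

Definition ext_Gamma_counit_inv_trans : NatTrans F (FComp Gm (ext_functor F)) :=
  Build_NatTrans _ _ F (FComp Gm (ext_functor F)) (fun X => ext_coker F (Gm X))
    (fun X Y f => eq_sym (ext_map_coker F (fmap Gm f))).

End ImageOfInitial.

Lemma ext_Gamma_counit_natural_in_functor (F G : Functor A B) (HF : preserves_fin_colimits F)
  (HG : preserves_fin_colimits G) (al : NatTrans F G) (X : A) :
  ext_nat F G al (Gm X) · ext_Gamma_counit G HG X = ext_Gamma_counit F HF X · al X.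
Proof.
  apply ext_hom_ext.
  - rewrite <- !comp_assoc, ext_nat_coker, ext_Gamma_counit_coker, comp_assoc,
      ext_Gamma_counit_coker, comp_id_l, comp_id_r.
    reflexivity.
  - apply (image_initial_nh_eq F HF).
Qed.

(* [M X] and the extension of [Gamma · M] at [X] are both Theta-cokernels of
   [M (Gamma (ar X))]: the former because [X] is the Theta_Delta-cokernel of
   [Gamma (ar X)] and [M] preserves cokernels. *)
Section ExtensionOfRestriction.
Context (M : HCOb A B T).
Let Mf := proj1_sig M.
Let N := FComp Gm (nhF Mf).
Let cG := Gamma_coker_map I iI HI.
Let gG (X : Arr A) : NH (ThDelta A) (Gm (ar_s X)) X :=
  @pack _ (ThDelta A) _ _ _ (Gamma_coker_nh I iI HI X).

Lemma hc_Gamma_coker (X : Arr A) :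
  is_Th_cokernel T (fmap Mf (fmap Gm (ar X))) (Mf X) (fmap Mf (cG X))
    (trTh T (fmap_comp (nhF Mf) (fmap Gm (ar X)) (cG X)) (nhTh Mf (Gamma_coker_nh I iI HI X))).
Proof. exact (proj2 (proj2_sig M) _ _ _ _ _ _ (Gamma_coker_is_coker I iI HI X)). Qed.

Lemma ext_restr_counit_arrow (X : Arr A) :
  projT1 (nhmap Mf (gG X)) = fmap N (ar X) · fmap Mf (cG X).
Proof. exact (fmap_comp (nhF Mf) (fmap Gm (ar X)) (cG X)). Qed.

Definition ext_restr_counit (X : Arr A) : Hom (ext_ob N X) (Mf X) :=
  coker_desc T (ext_is_coker N X) (fmap Mf (cG X)) (nhmap Mf (gG X)) (ext_restr_counit_arrow X).

Definition ext_restr_counit_inv (X : Arr A) : Hom (Mf X) (ext_ob N X) :=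
  coker_desc T (hc_Gamma_coker X) (ext_coker N X) (ext_nh N X) eq_refl.

Lemma ext_restr_counit_coker (X : Arr A) :
  ext_coker N X · ext_restr_counit X = fmap Mf (cG X).
Proof. apply (coker_desc_spec T (ext_is_coker N X)). Qed.

Lemma ext_restr_counit_nh (X : Arr A) :
  rw (ext_nh N X) (ext_restr_counit X) = nhmap Mf (gG X).
Proof. apply (coker_desc_spec T (ext_is_coker N X)). Qed.

Lemma ext_restr_counit_iso (X : Arr A) :
  ext_restr_counit X · ext_restr_counit_inv X = idm _ /\
  ext_restr_counit_inv X · ext_restr_counit X = idm _.
Proof.
  destruct (coker_desc_spec T (hc_Gamma_coker X) (ext_coker N X) (ext_nh N X) eq_refl)
    as [Hi1 Hi2].
  apply (coker_comparison_inv T (ext_is_coker N X) (hc_Gamma_coker X)).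
  - apply ext_restr_counit_coker.
  - rewrite pack_trTh. apply ext_restr_counit_nh.
  - exact Hi1.
  - exact Hi2.
Qed.

Lemma ext_restr_counit_natural {X Y : Arr A} (u : Hom X Y) :
  ext_map N u · ext_restr_counit Y = ext_restr_counit X · fmap Mf u.
Proof.
  apply ext_hom_ext.
  - rewrite <- !comp_assoc, ext_map_coker, ext_restr_counit_coker, comp_assoc,
      ext_restr_counit_coker.
    change (fmap Mf (fmap Gm (snd (proj1_sig u))) · fmap Mf (cG Y) = fmap Mf (cG X) · fmap Mf u).
    rewrite <- !fmap_comp. f_equal. apply ArrHom_eq; simpl.
    + apply (initial_hom_eq I iI HI).
    + rewrite comp_id_l, comp_id_r. reflexivity.
  - rewrite <- !rw_comp, ext_map_nh, ext_restr_counit_nh, <- lw_rw, ext_restr_counit_nh.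
    change (lw (fmap Mf (fmap Gm (fst (proj1_sig u)))) (nhmap Mf (gG Y))
            = rw (nhmap Mf (gG X)) (fmap Mf u)).
    rewrite <- nhmap_lw, <- nhmap_rw. f_equal. apply pack_ThD_eq.
    + apply ArrHom_eq; simpl.
      * apply (initial_hom_eq I iI HI).
      * rewrite !comp_id_r, !comp_id_l. symmetry. apply ArrHom_square.
    + simpl. rewrite !comp_id_r, !comp_id_l. reflexivity.
Qed.

Definition ext_restr_counit_trans : NatTrans (ext_functor N) Mf :=
  Build_NatTrans _ _ (ext_functor N) Mf ext_restr_counit
    (fun X Y u => ext_restr_counit_natural u).

Lemma ext_restr_counit_is_2mor : @is_2mor _ _ _ _ (ext_nhmor N) Mf ext_restr_counit_trans.
Proof.
  intros X Y g phi. rewrite heq_pack.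
  change (lw (ext_restr_counit X) (nhmap Mf (pack phi))
          = rw (pack (ext_nh_map N g phi)) (ext_restr_counit Y)).
  apply ext_nh_ext.
  - change (ext_restr_counit X · fmap Mf g · idm _ = idm _ · ext_map N g · ext_restr_counit Y).
    rewrite comp_id_r, comp_id_l. symmetry. apply ext_restr_counit_natural.
  - rewrite lw_comp, ext_restr_counit_coker, lw_rw, ext_nh_map_spec, <- lw_rw,
      ext_restr_counit_nh.
    change (lw (fmap Mf (cG X)) (nhmap Mf (pack phi))
            = lw (fmap Mf (fmap Gm (proj1_sig phi))) (nhmap Mf (gG Y))).
    rewrite <- !nhmap_lw. f_equal. apply pack_ThD_eq.
    + destruct phi as [p [Hp1 Hp2]]. apply ArrHom_eq; simpl.
      * apply (initial_hom_eq I iI HI).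
      * rewrite !comp_id_r, comp_id_l. symmetry. exact Hp2.
    + simpl. rewrite !comp_id_r, comp_id_l. reflexivity.
Qed.

Definition ext_restr_counit_inv_trans : NatTrans Mf (ext_functor N) :=
  Build_NatTrans _ _ Mf (ext_functor N) ext_restr_counit_inv
    (fun X Y f => NatTrans_inv_natural ext_restr_counit_trans ext_restr_counit_inv
       (fun X => proj1 (ext_restr_counit_iso X)) (fun X => proj2 (ext_restr_counit_iso X)) f).

Lemma ext_restr_counit_inv_is_2mor :
  @is_2mor _ _ _ _ Mf (ext_nhmor N) ext_restr_counit_inv_trans.
Proof.
  exact (@is_2mor_inv _ _ _ _ (ext_nhmor N) Mf ext_restr_counit_trans ext_restr_counit_inv_trans
           (fun X => proj1 (ext_restr_counit_iso X)) (fun X => proj2 (ext_restr_counit_iso X))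
           ext_restr_counit_is_2mor).
Qed.

End ExtensionOfRestriction.

Lemma ext_restr_counit_natural_in_morphism (M M' : HCOb A B T) (a : TwoMor M M') (X : Arr A) :
  ext_nat (FComp Gm (nhF (proj1_sig M))) (FComp Gm (nhF (proj1_sig M')))
    (NTWhiskL Gm (proj1_sig a)) X · ext_restr_counit M' X
  = ext_restr_counit M X · proj1_sig a X.
Proof.
  destruct a as [a Ha]. simpl.
  apply ext_hom_ext.
  - rewrite <- !comp_assoc, ext_nat_coker, ext_restr_counit_coker, comp_assoc,
      ext_restr_counit_coker.
    simpl. symmetry. apply (ntc_nat a).
  - rewrite <- !rw_comp, ext_nat_nh, ext_restr_counit_nh, <- lw_rw, ext_restr_counit_nh.
    exact (Ha _ _ _ (Gamma_coker_nh I iI HI X)).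
Qed.

Definition hc_counit : NatTrans (FComp (PreGamma A B T I iI HI) ext_hc_functor) (FId (HCCat A B T)).
Proof.
  refine (Build_NatTrans _ _ (FComp (PreGamma A B T I iI HI) ext_hc_functor)
            (FId (HCCat A B T))
            (fun M => exist _ (ext_restr_counit_trans M) (ext_restr_counit_is_2mor M)) _).
  intros M M' a. apply TwoMor_ext, nt_ext. intros X.
  exact (ext_restr_counit_natural_in_morphism M M' a X).
Defined.

Definition colim_counit :
  NatTrans (FComp ext_hc_functor (PreGamma A B T I iI HI)) (FId (ColimCat A B)).
Proof.
  refine (Build_NatTrans _ _ (FComp ext_hc_functor (PreGamma A B T I iI HI))
            (FId (ColimCat A B)) (fun F => ext_Gamma_counit_trans (proj1_sig F) (proj2_sig F)) _).
  intros F G al. apply nt_ext. intros X.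
  exact (ext_Gamma_counit_natural_in_functor _ _ (proj2_sig F) (proj2_sig G) al X).
Defined.

Lemma PreGamma_equivalence : is_equivalence_with (PreGamma A B T I iI HI) ext_hc_functor.
Proof.
  split.
  - exists hc_counit. intros M.
    exists (exist _ (ext_restr_counit_inv_trans M) (ext_restr_counit_inv_is_2mor M)).
    split; apply TwoMor_ext, nt_ext; intros X; apply (ext_restr_counit_iso M X).
  - exists colim_counit. intros F.
    exists (ext_Gamma_counit_inv_trans (proj1_sig F)).
    split; apply nt_ext; intros X.
    + exact (ext_Gamma_counit_coker_inv (proj1_sig F) (proj2_sig F) X).
    + exact (ext_Gamma_counit_coker (proj1_sig F) (proj2_sig F) X).
Qed.

End Extension.

Lemma strong_coker_choice {B : Category} (T : NHStruct B)
  (HBc : forall (X Y : B) (g : Hom X Y),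
      exists (K : B) (c : Hom Y K) (gam : T X K (g · c)), is_strong_Th_cokernel T g K c gam)
  (X Y : B) (g : Hom X Y) :
  {K : B & {c : Hom Y K & {gam : T X K (g · c) | is_strong_Th_cokernel T g K c gam}}}.
Proof.
  destruct (constructive_indefinite_description _ (HBc X Y g)) as [K HK].
  destruct (constructive_indefinite_description _ HK) as [c Hc].
  destruct (constructive_indefinite_description _ Hc) as [gam Hg].
  exact (existT _ K (existT _ c (exist _ gam Hg))).
Defined.

Theorem proposition4p3
  (A : Category) (HA : has_finite_colimits A)
  (I : A) (iI : forall X : A, Hom I X) (HI : forall (X : A) (f : Hom I X), f = iI X)
  (B : Category) (T : NHStruct B)
  (HRI : reduced_interchange T)
  (HB : has_finite_colimits B)
  (HBs : all_fin_colimits_Th_strong T)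
  (HBc : forall (X Y : B) (g : Hom X Y),
      exists (K : B) (c : Hom Y K) (gam : T X K (g · c)),
        is_strong_Th_cokernel T g K c gam) :
  exists Psi : Functor (ColimCat A B) (HCCat A B T),
    is_equivalence_with (PreGamma A B T I iI HI) Psi /\
    (forall (F : ColimCat A B) (X : ArrOb A),
       exists (c : Hom (proj1_sig F (ar_t X)) (nhF (proj1_sig (Psi F)) X))
              (gam : T _ _ (fmap (proj1_sig F) (ar X) · c)),
         is_Th_cokernel T (fmap (proj1_sig F) (ar X)) (nhF (proj1_sig (Psi F)) X) c gam).
Proof.
  set (ch := strong_coker_choice T HBc).
  set (K := fun X Y g => projT1 (ch X Y g)).
  set (c := fun X Y g => projT1 (projT2 (ch X Y g)) : Hom Y (K X Y g)).
  set (gam := fun X Y g => proj1_sig (projT2 (projT2 (ch X Y g))) : T X (K X Y g) (g · c X Y g)).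
  assert (HK : forall X Y g, is_strong_Th_cokernel T g (K X Y g) (c X Y g) (gam X Y g))
    by (intros X Y g; exact (proj2_sig (projT2 (projT2 (ch X Y g))))).
  exists (ext_hc_functor T HRI K c gam HK HBs HA). split.
  - exact (PreGamma_equivalence T HRI K c gam HK HBs HA I iI HI).
  - intros F X. exists (ext_coker K c (proj1_sig F) X), (gam _ _ (fmap (proj1_sig F) (ar X))).
    exact (ext_is_coker T K c gam HK (proj1_sig F) X).
Qed.
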